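(* Let $m\ge 2$. For $i=1,\dots,m$ let $p_i(z)=\sum_{j\ge1}p_{i,j}z^j$ be a power series with nonnegative real coefficients, zero constant term and radius of convergence $R_i>0$. For $n\ge0$ let $$D_n=\sum_{(c_1,\dots,c_m)}\ \prod_{i=1}^m\ \prod_{\ell=1}^{k} p_{i,c_{i,\ell}},$$ where the sum ranges over all $m$-tuples $(c_1,\dots,c_m)$ such that, for some common $k\ge0$, each $c_i=(c_{i,1},\dots,c_{i,k})$ is a composition of $n$ with exactly $k$ parts (a $k$-tuple of positive integers summing to $n$; for $n=0$ only the empty composition with $k=0$ is allowed, contributing $1$). (When all $p_{i,j}\in\{0,1\}$, $D_n$ is the number of $m$-tuples of compositions of $n$, the $i$-th one having all its parts in $\mathcal P_i=\{j: p_{i,j}=1\}$, all having the same number of parts.) Let $D(z)=\sum_{n\ge0}D_nz^n$. Fix radii $r_2,\dots,r_m>0$ with $1/r_i<R_i$ for $i=2,\dots,m$. Then there is $\delta>0$ such that for all complex $z$ with $|z|<\delta$ the series $D(z)$ converges and $$D(z)=\frac{1}{(2i\pi)^{m-1}}\oint\cdots\oint \frac{1}{1-p_1(z\,t_2\cdots t_m)\,p_2(1/t_2)\cdots p_m(1/t_m)}\,\frac{dt_2}{t_2}\cdots\frac{dt_m}{t_m},$$ where each $t_j$ runs counterclockwise over the circle $|t_j|=r_j$. *)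

From Stdlib Require Import Reals List.
From Coquelicot Require Import Coquelicot.
Import ListNotations.
Open Scope R_scope.

Fixpoint compositions (k n : nat) : list (list nat) :=
  match k with
  | O => match n with O => [[]] | S _ => [] end
  | S k' => flat_map (fun j => map (fun c => j :: c) (compositions k' (n - j)))
                     (seq 1 n)
  end.

Fixpoint tuples {A : Type} (m : nat) (l : list A) : list (list A) :=
  match m with
  | O => [[]]
  | S m' => flat_map (fun x => map (fun t => x :: t) (tuples m' l)) l
  end.

Definition Rsum (l : list R) : R := fold_right Rplus 0 l.
Definition Rprod (l : list R) : R := fold_right Rmult 1 l.

(** Weight of an m-tuple of compositions (c_1,...,c_m): the i-th composition
    (i = 1..m) contributes prod_l p i (c_{i,l}). *)
Definition tuple_weight (p : nat -> nat -> R) (cs : list (list nat)) : R :=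
  Rprod (map (fun i => Rprod (map (p (i + 1)%nat) (nth i cs [])))
             (seq 0 (length cs))).

(** D_n: sum over all m-tuples of compositions of n having a common number k
    of parts.  Since a composition of n has at most n parts (and k = 0 only
    for n = 0), k ranges over 0..n. *)
Definition Dcoef (m : nat) (p : nat -> nat -> R) (n : nat) : R :=
  Rsum (map (fun k => Rsum (map (tuple_weight p) (tuples m (compositions k n))))
            (seq 0 (S n))).

Definition pser_partial (a : nat -> R) (z : C) (N : nat) : C :=
  @sum_n C_AbelianMonoid (fun j => Cmult (RtoC (a j)) (@pow_n C_Ring z j)) N.
Definition pser (a : nat -> R) (z : C) : C :=
  (real (Lim_seq (fun N => fst (pser_partial a z N))),
   real (Lim_seq (fun N => snd (pser_partial a z N)))).

Definition Cprod (l : list C) : C := fold_right Cmult (RtoC 1) l.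

Definition circ (r th : R) : C := (r * cos th, r * sin th).
Definition circ' (r th : R) : C := (- (r * sin th), r * cos th).

Definition contour_circle (r : R) (f : C -> C) : C :=
  @RInt C_R_CompleteNormedModule (fun th => Cmult (f (circ r th)) (circ' r th))
        0 (2 * PI).

(** Iterated contour integrals over circles of radii rs (first radius is the
    outermost integral); the variables are passed to F as a list. *)
Fixpoint iter_contour (rs : list R) (F : list C -> C) : C :=
  match rs with
  | [] => F []
  | r :: rs' => contour_circle r (fun t => iter_contour rs' (fun ts => F (t :: ts)))
  end.

(** The integrand 1/(1 - p1(z t2..tm) p2(1/t2)...pm(1/tm)) * 1/(t2...tm),
    where ts = [t_2; ...; t_m]. *)
Definition integrand (m : nat) (p : nat -> nat -> R) (z : C) (ts : list C) : C :=
  Cmult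
    (Cinv (Cminus (RtoC 1)
       (Cmult (pser (p 1%nat) (Cmult z (Cprod ts)))
              (Cprod (map (fun j => pser (p (j + 2)%nat) (Cinv (nth j ts (RtoC 1))))
                          (seq 0 (m - 1)))))))
    (Cprod (map Cinv ts)).

From Stdlib Require Import Reals List Lia Lra FunctionalExtensionality.
From Coquelicot Require Import Coquelicot.
Import ListNotations.
Open Scope R_scope.

(** For small [|z|] the kernel [K = p_1(z t_2...t_m) p_2(1/t_2)...p_m(1/t_m)] is at most
    [1/2] on the torus, so [1/(1-K) = sum_k K^k] uniformly there and the integral is the sum
    of the integrals of [K^k dt_2/t_2 ... dt_m/t_m].  Expanding [p_1(z t_2...t_m)^k] in powers
    of [z] separates the variables, and over a circle [t^n p_i(1/t)^k dt/t] integrates to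
    [2 i pi] times the coefficient of [z^n] in [p_i(z)^k].  So the [k]-th integral is
    [(2 i pi)^(m-1) sum_n E_(k,n) z^n] with [E_(k,n) = prod_i [z^n] p_i(z)^k], while
    [D_n = sum_k E_(k,n)] since a composition of [n] into [k] parts is a term of [p_i(z)^k].
    The double series is summed using [E_(k,n) (2|z|)^n <= 2^-k], read off from the same
    representation at the real point [2|z|]. *)

(** * Compositions and coefficients of powers *)

(** Coefficient of [z ^ n] in [(sum_j a j z ^ j) ^ k]. *)
Fixpoint pow_coef (a : nat -> R) (k n : nat) : R :=
  match k with
  | O => if Nat.eqb n 0 then 1 else 0
  | S k' => sum_f_R0 (fun j => a j * pow_coef a k' (n - j)) n
  end.

Lemma pow_coef_nonneg a : (forall j, 0 <= a j) -> forall k n, 0 <= pow_coef a k n.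
Proof.
  intros Ha k; induction k as [|k IH]; intros n; simpl.
  - destruct (Nat.eqb n 0); lra.
  - apply cond_pos_sum; intros j; apply Rmult_le_pos; auto.
Qed.

Lemma pow_coef_lt a : a 0%nat = 0 -> forall k n, (n < k)%nat -> pow_coef a k n = 0.
Proof.
  intros Ha0 k; induction k as [|k IH]; intros n Hn; [lia|simpl].
  rewrite (sum_eq _ (fun _ => 0)).
  - clear; induction n; simpl; lra.
  - intros [|j] Hj; [rewrite Ha0; ring|rewrite IH by lia; ring].
Qed.

Lemma Rsum_app l1 l2 : Rsum (l1 ++ l2) = Rsum l1 + Rsum l2.
Proof. induction l1 as [|x l IH]; simpl; [ring|rewrite IH; ring]. Qed.

Lemma Rsum_flat_map {A B} (f : A -> list B) (g : B -> R) l :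
  Rsum (map g (flat_map f l)) = Rsum (map (fun x => Rsum (map g (f x))) l).
Proof. induction l as [|x l IH]; simpl; auto. rewrite map_app, Rsum_app, IH; auto. Qed.

Lemma Rsum_scal_l {A} (g : A -> R) c l :
  Rsum (map (fun x => c * g x) l) = c * Rsum (map g l).
Proof. induction l as [|x l IH]; simpl; [ring|rewrite IH; ring]. Qed.

Lemma Rsum_scal_r {A} (g : A -> R) c l :
  Rsum (map (fun x => g x * c) l) = Rsum (map g l) * c.
Proof. induction l as [|x l IH]; simpl; [ring|rewrite IH; ring]. Qed.

Lemma Rsum_seq (g : nat -> R) s n :
  Rsum (map g (seq s (S n))) = sum_f_R0 (fun i => g (s + i)%nat) n.
Proof.
  induction n as [|n IH]; [simpl; rewrite Nat.add_0_r; ring|].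
  rewrite seq_S, map_app, Rsum_app, IH; simpl.
  replace (s + S n)%nat with (S (s + n)) by lia; ring.
Qed.

Lemma Rsum_compositions a : a 0%nat = 0 ->
  forall k n, Rsum (map (fun c => Rprod (map a c)) (compositions k n)) = pow_coef a k n.
Proof.
  intros Ha0 k; induction k as [|k IH]; intros n.
  - destruct n; simpl; unfold Rprod; simpl; ring.
  - simpl; rewrite Rsum_flat_map; destruct n as [|n]; [simpl; rewrite Ha0; ring|].
    transitivity (Rsum (map (fun j => a j * pow_coef a k (S n - j)) (seq 1 (S n)))).
    + f_equal; apply map_ext; intros j.
      rewrite map_map, <- IH, <- Rsum_scal_l; reflexivity.
    + rewrite Rsum_seq, (decomp_sum _ (S n)) by lia; simpl; rewrite Ha0; ring.
Qed.

Lemma Rsum_tuples (f : nat -> list nat -> R) (L : list (list nat)) : forall m s,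
  Rsum (map (fun cs => Rprod (map (fun i => f (s + i)%nat (nth i cs []))
                                  (seq 0 (length cs))))
            (tuples m L))
  = Rprod (map (fun i => Rsum (map (f (s + i)%nat) L)) (seq 0 m)).
Proof.
  induction m as [|m IH]; intros s; [unfold Rprod, Rsum; simpl; ring|].
  simpl tuples; rewrite Rsum_flat_map.
  transitivity (Rsum (map (fun x => f s x *
     Rprod (map (fun i => Rsum (map (f (S s + i)%nat) L)) (seq 0 m))) L)).
  - f_equal; apply map_ext; intros x.
    rewrite map_map, <- IH, <- Rsum_scal_l; f_equal; apply map_ext; intros t.
    simpl length; cbn [seq map]; rewrite <- seq_shift, map_map, Nat.add_0_r.
    unfold Rprod; cbn [fold_right]; do 2 f_equal.
    apply map_ext; intros i; simpl; f_equal; lia.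
  - rewrite Rsum_scal_r; cbn [seq map]; rewrite <- seq_shift, map_map.
    unfold Rprod at 2; cbn [fold_right]; rewrite Nat.add_0_r; f_equal.
    unfold Rprod; f_equal; apply map_ext; intros i.
    replace (S s + i)%nat with (s + S i)%nat by lia; reflexivity.
Qed.

(** [diag_coef m p k n]: the contribution of the tuples with exactly [k] parts to [Dcoef m p n]. *)
Definition diag_coef (m : nat) (p : nat -> nat -> R) (k n : nat) : R :=
  Rprod (map (fun i => pow_coef (p (i + 1)%nat) k n) (seq 0 m)).

Lemma Dcoef_diag_coef m p : (forall i, (1 <= i <= m)%nat -> p i 0%nat = 0) ->
  forall n, Dcoef m p n = sum_f_R0 (fun k => diag_coef m p k n) n.
Proof.
  intros Hp0 n; unfold Dcoef; rewrite Rsum_seq; apply sum_eq; intros k _; simpl.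
  unfold tuple_weight.
  rewrite (Rsum_tuples (fun j c => Rprod (map (p (j + 1)%nat) c)) _ m 0).
  unfold diag_coef; f_equal; apply map_ext_in; intros i Hi; apply in_seq in Hi.
  apply Rsum_compositions, Hp0; lia.
Qed.

Lemma diag_coef_split m p k n : (1 <= m)%nat ->
  diag_coef m p k n =
  pow_coef (p 1%nat) k n * Rprod (map (fun i => pow_coef (p i) k n) (seq 2 (m - 1))).
Proof.
  intros Hm; unfold diag_coef; destruct m as [|m]; [lia|].
  replace (S m - 1)%nat with m by lia; cbn [seq map].
  unfold Rprod at 1; cbn [fold_right]; f_equal.
  rewrite <- (seq_shift m 1), map_map; unfold Rprod; f_equal.
  apply map_ext; intros i; do 2 f_equal; lia.
Qed.

Lemma diag_coef_lt m p k n :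
  (1 <= m)%nat -> p 1%nat 0%nat = 0 -> (n < k)%nat -> diag_coef m p k n = 0.
Proof. intros Hm Hp0 Hnk; rewrite diag_coef_split, pow_coef_lt by auto; ring. Qed.

Lemma Rprod_nonneg (f : nat -> R) l : (forall i, In i l -> 0 <= f i) -> 0 <= Rprod (map f l).
Proof.
  induction l as [|i l IH]; intros H; unfold Rprod in *; simpl; [lra|].
  apply Rmult_le_pos; [apply H; simpl|apply IH; intros; apply H; simpl]; auto.
Qed.

Lemma diag_coef_nonneg m p : (forall i j, (1 <= i <= m)%nat -> 0 <= p i j) ->
  forall k n, 0 <= diag_coef m p k n.
Proof.
  intros Hp k n; apply Rprod_nonneg; intros i Hi; apply in_seq in Hi.
  apply pow_coef_nonneg; intros; apply Hp; lia.
Qed.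

Lemma is_series_sum_f_R0 (a : nat -> R) l : is_series a l ->
  forall eps, 0 < eps -> exists N, forall n, (N <= n)%nat -> Rabs (sum_f_R0 a n - l) < eps.
Proof. intros H%is_series_Reals eps Heps; apply (H eps Heps). Qed.

Lemma sum_f_R0_le_series (b : nat -> R) B : (forall n, 0 <= b n) ->
  is_series b B -> forall N, sum_f_R0 b N <= B.
Proof.
  intros Hb HB N; rewrite <- sum_n_Reals.
  apply (is_lim_seq_incr_compare (sum_n b) B HB); intros n.
  rewrite sum_Sn; unfold plus; simpl; specialize (Hb (S n)); lra.
Qed.

Lemma series_nonneg (b : nat -> R) B : (forall n, 0 <= b n) -> is_series b B -> 0 <= B.
Proof. intros Hb HB; apply Rle_trans with (sum_f_R0 b 0); [apply Hb|]; now apply sum_f_R0_le_series. Qed.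

Lemma Rabs_fst_le_Cmod (z : C) : Rabs (fst z) <= Cmod z.
Proof. eapply Rle_trans; [apply Rmax_l|apply Rmax_Cmod]. Qed.

Lemma Rabs_snd_le_Cmod (z : C) : Rabs (snd z) <= Cmod z.
Proof. eapply Rle_trans; [apply Rmax_r|apply Rmax_Cmod]. Qed.

Lemma Cmod_le_Rabs_plus (z : C) : Cmod z <= Rabs (fst z) + Rabs (snd z).
Proof.
  pose proof (Rabs_pos (fst z)); pose proof (Rabs_pos (snd z)).
  unfold Cmod; rewrite <- (sqrt_pow2 (Rabs (fst z) + Rabs (snd z))) by lra.
  apply sqrt_le_1_alt; rewrite <- (pow2_abs (fst z)), <- (pow2_abs (snd z)); nra.
Qed.

(** * Limits of complex sequences *)

Definition is_lim_Cseq (u : nat -> C) (l : C) : Prop :=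
  forall eps, 0 < eps -> exists N, forall n, (N <= n)%nat -> Cmod (u n - l)%C < eps.

Lemma is_lim_Cseq_unique u l1 l2 : is_lim_Cseq u l1 -> is_lim_Cseq u l2 -> l1 = l2.
Proof.
  intros H1 H2.
  destruct (Req_dec (Cmod (l1 - l2)%C) 0) as [E|E].
  - apply Cmod_eq_0 in E; replace l1 with ((l1 - l2) + l2)%C by ring; rewrite E; ring.
  - pose proof (Cmod_ge_0 (l1 - l2)%C).
    set (e := Cmod (l1 - l2)%C / 2); assert (He : 0 < e) by (unfold e; lra).
    destruct (H1 e He) as [N1 HN1], (H2 e He) as [N2 HN2]; set (n := (N1 + N2)%nat).
    specialize (HN1 n ltac:(lia)); specialize (HN2 n ltac:(lia)).
    pose proof (Cmod_triangle (u n - l2)%C (- (u n - l1))%C) as T.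
    rewrite Cmod_opp in T; replace (u n - l2 + - (u n - l1))%C with (l1 - l2)%C in T by ring.
    unfold e in *; lra.
Qed.

Lemma is_lim_Cseq_ext_loc u v l N0 :
  (forall n, (N0 <= n)%nat -> u n = v n) -> is_lim_Cseq u l -> is_lim_Cseq v l.
Proof.
  intros E H eps He; destruct (H eps He) as [N HN]; exists (N + N0)%nat.
  intros n Hn; rewrite <- E by lia; apply HN; lia.
Qed.

Lemma is_lim_Cseq_ext u v l : (forall n, u n = v n) -> is_lim_Cseq u l -> is_lim_Cseq v l.
Proof. intros E; apply (is_lim_Cseq_ext_loc u v l 0); auto. Qed.

Lemma is_lim_Cseq_const c : is_lim_Cseq (fun _ => c) c.
Proof.
  intros eps He; exists 0%nat; intros.
  replace (c - c)%C with (RtoC 0) by ring; rewrite Cmod_0; auto.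
Qed.

Lemma is_lim_Cseq_plus u v a b :
  is_lim_Cseq u a -> is_lim_Cseq v b -> is_lim_Cseq (fun n => u n + v n)%C (a + b)%C.
Proof.
  intros Hu Hv eps He.
  destruct (Hu (eps / 2) ltac:(lra)) as [N1 H1], (Hv (eps / 2) ltac:(lra)) as [N2 H2].
  exists (N1 + N2)%nat; intros n Hn.
  replace (u n + v n - (a + b))%C with ((u n - a) + (v n - b))%C by ring.
  eapply Rle_lt_trans; [apply Cmod_triangle|].
  specialize (H1 n ltac:(lia)); specialize (H2 n ltac:(lia)); lra.
Qed.

Lemma is_lim_Cseq_scal_l c u a : is_lim_Cseq u a -> is_lim_Cseq (fun n => c * u n)%C (c * a)%C.
Proof.
  intros Hu eps He; pose proof (Cmod_ge_0 c).
  destruct (Hu (eps / (Cmod c + 1))) as [N HN]; [apply Rdiv_lt_0_compat; lra|].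
  exists N; intros n Hn; specialize (HN n Hn).
  replace (c * u n - c * a)%C with (c * (u n - a))%C by ring; rewrite Cmod_mult.
  pose proof (Cmod_ge_0 (u n - a)%C).
  apply Rle_lt_trans with ((Cmod c + 1) * Cmod (u n - a)%C); [nra|].
  apply (Rmult_lt_compat_l (Cmod c + 1)) in HN; [|lra].
  replace ((Cmod c + 1) * (eps / (Cmod c + 1))) with eps in HN by (field; lra); lra.
Qed.

Lemma is_lim_Cseq_minus u v a b :
  is_lim_Cseq u a -> is_lim_Cseq v b -> is_lim_Cseq (fun n => u n - v n)%C (a - b)%C.
Proof.
  intros Hu Hv; apply (is_lim_Cseq_ext (fun n => u n + (-1) * v n)%C); [intros; ring|].
  replace (a - b)%C with (a + (-1) * b)%C by ring.
  apply is_lim_Cseq_plus, is_lim_Cseq_scal_l; auto.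
Qed.

Lemma is_lim_Cseq_pair u (a b : R) :
  is_lim_seq (fun n => fst (u n)) a -> is_lim_seq (fun n => snd (u n)) b -> is_lim_Cseq u (a, b).
Proof.
  intros Ha%is_lim_seq_spec Hb%is_lim_seq_spec eps He.
  destruct (Ha (mkposreal (eps / 2) ltac:(lra))) as [N1 H1].
  destruct (Hb (mkposreal (eps / 2) ltac:(lra))) as [N2 H2].
  exists (N1 + N2)%nat; intros n Hn; eapply Rle_lt_trans; [apply Cmod_le_Rabs_plus|].
  specialize (H1 n ltac:(lia)); specialize (H2 n ltac:(lia)); simpl in H1, H2 |- *.
  replace (fst (u n) + - a) with (fst (u n) - a) by ring.
  replace (snd (u n) + - b) with (snd (u n) - b) by ring; lra.
Qed.

Lemma is_lim_Cseq_fst u l : is_lim_Cseq u l -> is_lim_seq (fun n => fst (u n)) (fst l).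
Proof.
  intros H; apply is_lim_seq_spec; intros eps; destruct (H eps (cond_pos eps)) as [N HN].
  exists N; intros n Hn; eapply Rle_lt_trans; [|apply (HN n Hn)].
  replace (fst (u n) - fst l) with (fst (u n - l)%C) by (simpl; ring).
  apply Rabs_fst_le_Cmod.
Qed.

Lemma is_lim_Cseq_snd u l : is_lim_Cseq u l -> is_lim_seq (fun n => snd (u n)) (snd l).
Proof.
  intros H; apply is_lim_seq_spec; intros eps; destruct (H eps (cond_pos eps)) as [N HN].
  exists N; intros n Hn; eapply Rle_lt_trans; [|apply (HN n Hn)].
  replace (snd (u n) - snd l) with (snd (u n - l)%C) by (simpl; ring).
  apply Rabs_snd_le_Cmod.
Qed.

Lemma Cmod_lim_le u l c : is_lim_Cseq u l ->
  (exists N, forall n, (N <= n)%nat -> Cmod (u n) <= c) -> Cmod l <= c.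
Proof.
  intros H [N HN]; apply Rnot_lt_le; intros Hc.
  destruct (H (Cmod l - c) ltac:(lra)) as [N1 H1]; set (n := (N + N1)%nat).
  specialize (H1 n ltac:(lia)); specialize (HN n ltac:(lia)).
  pose proof (Cmod_triangle (u n) (- (u n - l))%C) as T.
  rewrite Cmod_opp in T; replace (u n + - (u n - l))%C with l in T by ring; lra.
Qed.

Lemma is_lim_Cseq_filterlim u l :
  is_lim_Cseq u l -> filterlim u eventually (@locally C_NormedModule l).
Proof.
  intros H; apply filterlim_locally; intros eps; destruct (H eps (cond_pos eps)) as [N HN].
  exists N; intros n Hn; apply (@norm_compat1 C_AbsRing C_NormedModule), HN; auto.
Qed.

Lemma filterlim_is_lim_Cseq u l :
  filterlim u eventually (@locally C_R_NormedModule l) -> is_lim_Cseq u l.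
Proof.
  intros H eps He.
  destruct (proj1 (filterlim_locally u l) H (mkposreal (eps / 2) ltac:(lra))) as [N HN].
  exists N; intros n Hn; destruct (HN n Hn) as [B1 B2].
  change (Rabs (fst (u n) - fst l) < eps / 2) in B1.
  change (Rabs (snd (u n) - snd l) < eps / 2) in B2.
  eapply Rle_lt_trans; [apply Cmod_le_Rabs_plus|].
  replace (fst (u n - l)%C) with (fst (u n) - fst l) by (simpl; ring).
  replace (snd (u n - l)%C) with (snd (u n) - snd l) by (simpl; ring); lra.
Qed.

Lemma sum_f_R0_scal_l c f N : sum_f_R0 (fun i => c * f i) N = c * sum_f_R0 f N.
Proof. induction N as [|N IH]; simpl; [|rewrite IH]; ring. Qed.

Lemma sum_half_pow N : sum_f_R0 (fun n => (1 / 2) ^ n) N = 2 - (1 / 2) ^ N.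
Proof. rewrite tech3 by lra; simpl; field. Qed.

Lemma is_series_half_pow c : is_series (fun n => c * (1 / 2) ^ n) (c * 2).
Proof.
  assert (G : Rabs (1 / 2) < 1) by (rewrite Rabs_pos_eq; lra).
  pose proof (is_series_scal_l c _ _ (is_series_geom (1 / 2) G)) as H.
  replace (c * 2) with (scal c (/ (1 - 1 / 2))) by (unfold scal; simpl; unfold mult; simpl; field).
  exact H.
Qed.

Lemma sum_f_R0_extend (f : nat -> R) n N : (forall k, (n < k)%nat -> f k = 0) -> (n <= N)%nat ->
  sum_f_R0 f n = sum_f_R0 f N.
Proof. intros H HN; induction HN as [|N HN IH]; simpl; [|rewrite H, IH by lia]; ring. Qed.

Definition csum (f : nat -> C) (N : nat) : C := @sum_n C_AbelianMonoid f N.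

Lemma csum_O f : csum f 0 = f 0%nat.
Proof. unfold csum; rewrite sum_O; reflexivity. Qed.

Lemma csum_S f N : csum f (S N) = (csum f N + f (S N))%C.
Proof. unfold csum; rewrite sum_Sn; reflexivity. Qed.

Lemma pow_n_Cpow (z : C) n : @pow_n C_Ring z n = Cpow z n.
Proof. induction n; simpl; auto. Qed.

Lemma csum_ext f g n : (forall i, (i <= n)%nat -> f i = g i) -> csum f n = csum g n.
Proof.
  induction n as [|n IH]; intros H; [rewrite !csum_O; auto|].
  rewrite !csum_S, IH, H; auto; intros; apply H; lia.
Qed.

Lemma fst_csum f N : fst (csum f N) = sum_f_R0 (fun j => fst (f j)) N.
Proof. induction N as [|N IH]; [rewrite csum_O|rewrite csum_S; simpl; rewrite <- IH]; auto. Qed.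

Lemma snd_csum f N : snd (csum f N) = sum_f_R0 (fun j => snd (f j)) N.
Proof. induction N as [|N IH]; [rewrite csum_O|rewrite csum_S; simpl; rewrite <- IH]; auto. Qed.

Lemma csum_RtoC_mult_r (f : nat -> R) (c : C) N :
  csum (fun i => RtoC (f i) * c)%C N = (RtoC (sum_f_R0 f N) * c)%C.
Proof.
  induction N as [|N IH]; [apply csum_O|].
  rewrite csum_S, IH; simpl sum_f_R0; rewrite RtoC_plus; ring.
Qed.

Lemma csum_scal_l (c : C) f N : csum (fun i => c * f i)%C N = (c * csum f N)%C.
Proof. induction N as [|N IH]; [rewrite !csum_O|rewrite !csum_S, IH; ring]; auto. Qed.

Lemma csum_plus f g N : csum (fun i => f i + g i)%C N = (csum f N + csum g N)%C.
Proof. induction N as [|N IH]; [rewrite !csum_O|rewrite !csum_S, IH; ring]; auto. Qed.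

Lemma Cmod_csum_le f N : Cmod (csum f N) <= sum_f_R0 (fun j => Cmod (f j)) N.
Proof.
  induction N as [|N IH]; [rewrite csum_O; simpl; lra|].
  rewrite csum_S; eapply Rle_trans; [apply Cmod_triangle|simpl; lra].
Qed.

Lemma csum_swap (f : nat -> nat -> C) M N :
  csum (fun i => csum (fun j => f i j) M) N = csum (fun j => csum (fun i => f i j) N) M.
Proof.
  induction N as [|N IH].
  - rewrite csum_O; apply csum_ext; intros; rewrite csum_O; auto.
  - rewrite csum_S, IH, <- csum_plus; apply csum_ext; intros; rewrite csum_S; auto.
Qed.

Lemma csum_geom (P : C) N : ((1 - P) * csum (Cpow P) N = 1 - Cpow P (S N))%C.
Proof.
  induction N as [|N IH]; [rewrite csum_O; simpl; ring|].
  rewrite csum_S.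
  replace ((1 - P) * (csum (Cpow P) N + Cpow P (S N)))%C
    with ((1 - P) * csum (Cpow P) N + (1 - P) * Cpow P (S N))%C by ring.
  rewrite IH; simpl; ring.
Qed.

Lemma Cmod_csum_diff_le (u : nat -> C) (b : nat -> R) J d :
  (forall j, Cmod (u j) <= b j) ->
  Cmod (csum u (J + d) - csum u J)%C <= sum_f_R0 b (J + d) - sum_f_R0 b J.
Proof.
  intros Hb; induction d as [|d IH].
  - rewrite Nat.add_0_r; replace (csum u J - csum u J)%C with (RtoC 0) by ring.
    rewrite Cmod_0; lra.
  - rewrite Nat.add_succ_r, csum_S.
    replace (csum u (J + d) + u (S (J + d)) - csum u J)%C
      with ((csum u (J + d) - csum u J) + u (S (J + d)))%C by ring.
    eapply Rle_trans; [apply Cmod_triangle|]; simpl sum_f_R0 at 1.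
    specialize (Hb (S (J + d))); lra.
Qed.

Lemma Cmod_series_tail_le (u : nat -> C) (b : nat -> R) B U :
  (forall j, Cmod (u j) <= b j) -> is_series b B -> is_lim_Cseq (csum u) U ->
  forall J, Cmod (U - csum u J)%C <= B - sum_f_R0 b J.
Proof.
  intros Hb HB HU J.
  assert (Hb0 : forall j, 0 <= b j) by (intros j; eapply Rle_trans; [apply Cmod_ge_0|apply Hb]).
  apply (Cmod_lim_le (fun M => csum u M - csum u J)%C).
  - apply is_lim_Cseq_minus; [auto|apply is_lim_Cseq_const].
  - exists J; intros n Hn; replace n with (J + (n - J))%nat by lia.
    eapply Rle_trans; [apply Cmod_csum_diff_le; auto|].
    pose proof (sum_f_R0_le_series b B Hb0 HB (J + (n - J))); lra.
Qed.

Lemma Cpow_RtoC x n : Cpow (RtoC x) n = RtoC (x ^ n).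
Proof. induction n as [|n IH]; [reflexivity|simpl; rewrite IH, RtoC_mult; auto]. Qed.

Lemma Cmod_geom_tail_le (P V : C) N : Cmod P <= 1 / 2 ->
  Cmod (csum (fun k => Cpow P k * V) N - / (1 - P) * V)%C <= (1 / 2) ^ N * Cmod V.
Proof.
  intros HP.
  assert (H1P : 1 / 2 <= Cmod (1 - P)%C).
  { pose proof (Cmod_triangle (1 - P)%C P) as T.
    replace (1 - P + P)%C with (RtoC 1) in T by ring; rewrite Cmod_1 in T; lra. }
  assert (HnP : (1 - P)%C <> 0%C) by (intros E; rewrite E, Cmod_0 in H1P; lra).
  replace (csum (fun k => Cpow P k * V) N - / (1 - P) * V)%C
    with (- (Cpow P (S N) / (1 - P)) * V)%C.
  - rewrite !Cmod_mult, Cmod_opp, Cmod_div, Cmod_pow by auto.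
    apply Rmult_le_compat_r; [apply Cmod_ge_0|].
    assert (Cmod P ^ S N <= (1 / 2) ^ S N) by (apply pow_incr; split; auto; apply Cmod_ge_0).
    pose proof (pow_le (1 / 2) N ltac:(lra)).
    unfold Rdiv at 1; apply Rmult_le_reg_r with (Cmod (1 - P)%C); [lra|].
    rewrite Rmult_assoc, Rinv_l by lra; simpl in *; nra.
  - rewrite (csum_ext _ (fun k => V * Cpow P k)%C) by (intros; ring).
    rewrite csum_scal_l.
    replace (csum (Cpow P) N) with ((1 - Cpow P (S N)) / (1 - P))%C
      by (rewrite <- csum_geom; field; auto).
    field; auto.
Qed.

Lemma is_lim_Cseq_double_sum (e : nat -> nat -> C) (S : nat -> C) L :
  (forall k n, Cmod (e k n) <= (1 / 2) ^ k * (1 / 2) ^ n) ->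
  (forall k, is_lim_Cseq (csum (e k)) (S k)) -> is_lim_Cseq (csum S) L ->
  is_lim_Cseq (fun N => csum (fun k => csum (e k) N) N) L.
Proof.
  intros He HS HL.
  assert (Htail : forall k N, Cmod (S k - csum (e k) N)%C <= (1 / 2) ^ k * (1 / 2) ^ N).
  { intros k N; eapply Rle_trans;
      [apply (Cmod_series_tail_le _ _ _ _ (He k) (is_series_half_pow _) (HS k))|].
    rewrite sum_f_R0_scal_l, sum_half_pow; right; ring. }
  assert (Hsq : forall N, Cmod (csum S N - csum (fun k => csum (e k) N) N)%C <= 2 * (1 / 2) ^ N).
  { intros N.
    replace (csum S N - csum (fun k => csum (e k) N) N)%C
      with (csum (fun k => S k - csum (e k) N) N)%C.
    2:{ rewrite (csum_ext _ (fun k => S k + (-1) * csum (e k) N)%C) by (intros; ring).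
        rewrite csum_plus, csum_scal_l; ring. }
    eapply Rle_trans; [apply Cmod_csum_le|].
    eapply Rle_trans; [apply sum_Rle; intros k _; apply Htail|].
    rewrite (sum_eq _ (fun k => (1 / 2) ^ N * (1 / 2) ^ k)) by (intros; ring).
    rewrite sum_f_R0_scal_l, sum_half_pow; pose proof (pow_le (1 / 2) N ltac:(lra)); nra. }
  intros eps Heps; destruct (HL (eps / 2) ltac:(lra)) as [N1 HN1].
  destruct (pow_lt_1_zero (1 / 2) ltac:(rewrite Rabs_pos_eq; lra) (eps / 4) ltac:(lra))
    as [N2 HN2].
  exists (N1 + N2)%nat; intros N HN; specialize (HN1 N ltac:(lia)).
  specialize (HN2 N ltac:(lia)); rewrite Rabs_pos_eq in HN2 by (apply pow_le; lra).
  cbv beta; replace (csum (fun k => csum (e k) N) N - L)%C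
    with ((csum S N - L) + - (csum S N - csum (fun k => csum (e k) N) N))%C by ring.
  eapply Rle_lt_trans; [apply Cmod_triangle|]; rewrite Cmod_opp.
  specialize (Hsq N); lra.
Qed.

Lemma is_series_fst_of_csum u U :
  is_lim_Cseq (csum u) U -> is_series (fun j => fst (u j)) (fst U).
Proof.
  intros H%is_lim_Cseq_fst; change (is_lim_seq (sum_n (fun j => fst (u j))) (fst U)).
  eapply is_lim_seq_ext; [|exact H].
  intros n; cbv beta; rewrite fst_csum, sum_n_Reals; auto.
Qed.

Lemma is_series_snd_of_csum u U :
  is_lim_Cseq (csum u) U -> is_series (fun j => snd (u j)) (snd U).
Proof.
  intros H%is_lim_Cseq_snd; change (is_lim_seq (sum_n (fun j => snd (u j))) (snd U)).
  eapply is_lim_seq_ext; [|exact H].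
  intros n; cbv beta; rewrite snd_csum, sum_n_Reals; auto.
Qed.

Lemma ex_series_Rabs_fst u :
  ex_series (fun j => Cmod (u j)) -> ex_series (fun j => Rabs (fst (u j))).
Proof.
  apply (@ex_series_le R_AbsRing R_CompleteNormedModule); intros n.
  unfold norm; simpl; unfold abs; simpl; rewrite Rabs_Rabsolu; apply Rabs_fst_le_Cmod.
Qed.

Lemma ex_series_Rabs_snd u :
  ex_series (fun j => Cmod (u j)) -> ex_series (fun j => Rabs (snd (u j))).
Proof.
  apply (@ex_series_le R_AbsRing R_CompleteNormedModule); intros n.
  unfold norm; simpl; unfold abs; simpl; rewrite Rabs_Rabsolu; apply Rabs_snd_le_Cmod.
Qed.

Lemma sum_f_R0_plus f g n : sum_f_R0 (fun i => f i + g i) n = sum_f_R0 f n + sum_f_R0 g n.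
Proof. induction n as [|n IH]; simpl; [|rewrite IH]; ring. Qed.

Lemma sum_f_R0_minus f g n : sum_f_R0 (fun i => f i - g i) n = sum_f_R0 f n + - sum_f_R0 g n.
Proof. induction n as [|n IH]; simpl; [|rewrite IH]; ring. Qed.

(** Mertens' theorem, from the real one applied to the four products of real and
    imaginary parts. *)
Lemma is_lim_Cseq_cauchy_product (u v : nat -> C) U V :
  ex_series (fun j => Cmod (u j)) -> ex_series (fun j => Cmod (v j)) ->
  is_lim_Cseq (csum u) U -> is_lim_Cseq (csum v) V ->
  is_lim_Cseq (csum (fun n => csum (fun i => u i * v (n - i)%nat)%C n)) (U * V)%C.
Proof.
  intros Au Av Hu Hv.
  pose proof (is_series_fst_of_csum u U Hu) as Fu.
  pose proof (is_series_snd_of_csum u U Hu) as Su.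
  pose proof (is_series_fst_of_csum v V Hv) as Fv.
  pose proof (is_series_snd_of_csum v V Hv) as Sv.
  pose proof (ex_series_Rabs_fst u Au) as AFu; pose proof (ex_series_Rabs_snd u Au) as ASu.
  pose proof (ex_series_Rabs_fst v Av) as AFv; pose proof (ex_series_Rabs_snd v Av) as ASv.
  destruct U as [u1 u2], V as [v1 v2]; simpl in *.
  change ((u1, u2) * (v1, v2))%C with (u1 * v1 - u2 * v2, u1 * v2 + u2 * v1).
  apply is_lim_Cseq_pair.
  - pose proof (is_series_minus _ _ _ _ (is_series_mult _ _ _ _ Fu Fv AFu AFv)
                                        (is_series_mult _ _ _ _ Su Sv ASu ASv)) as M.
    eapply is_lim_seq_ext; [|exact M]; intros n; cbv beta.
    rewrite sum_n_Reals, fst_csum; apply sum_eq; intros j _.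
    rewrite fst_csum; unfold minus, plus, opp; simpl.
    rewrite <- sum_f_R0_minus; apply sum_eq; intros i _; simpl; ring.
  - pose proof (is_series_plus _ _ _ _ (is_series_mult _ _ _ _ Fu Sv AFu ASv)
                                       (is_series_mult _ _ _ _ Su Fv ASu AFv)) as M.
    eapply is_lim_seq_ext; [|exact M]; intros n; cbv beta.
    rewrite sum_n_Reals, snd_csum; apply sum_eq; intros j _.
    rewrite snd_csum; unfold plus; simpl.
    rewrite <- sum_f_R0_plus; apply sum_eq; intros i _; simpl; ring.
Qed.

(** * Power series with nonnegative coefficients *)

Lemma Cmod_coef_pow (a : R) (w : C) j : Cmod (RtoC a * @pow_n C_Ring w j)%C = Rabs a * Cmod w ^ j.
Proof. rewrite Cmod_mult, Cmod_R, pow_n_Cpow, Cmod_pow; auto. Qed.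

Lemma pser_partial_csum a w N :
  pser_partial a w N = csum (fun j => RtoC (a j) * @pow_n C_Ring w j)%C N.
Proof. reflexivity. Qed.

Lemma is_lim_pser a w : (forall j, 0 <= a j) -> ex_series (fun j => a j * Cmod w ^ j) ->
  is_lim_Cseq (pser_partial a w) (pser a w).
Proof.
  intros Ha H; set (u := fun j => (RtoC (a j) * @pow_n C_Ring w j)%C).
  assert (Hu : ex_series (fun j => Cmod (u j))).
  { eapply ex_series_ext; [|exact H]; intros j; unfold u.
    rewrite Cmod_coef_pow, Rabs_pos_eq; auto. }
  pose proof (Series_correct _ (ex_series_Rabs _ (ex_series_Rabs_fst u Hu))) as Sf.
  pose proof (Series_correct _ (ex_series_Rabs _ (ex_series_Rabs_snd u Hu))) as Ss.
  assert (Lf : is_lim_seq (fun N => fst (pser_partial a w N)) (Series (fun j => fst (u j)))).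
  { eapply is_lim_seq_ext; [|exact Sf]; intros n; cbv beta.
    rewrite sum_n_Reals, pser_partial_csum, fst_csum; auto. }
  assert (Ls : is_lim_seq (fun N => snd (pser_partial a w N)) (Series (fun j => snd (u j)))).
  { eapply is_lim_seq_ext; [|exact Ss]; intros n; cbv beta.
    rewrite sum_n_Reals, pser_partial_csum, snd_csum; auto. }
  replace (pser a w) with (Series (fun j => fst (u j)), Series (fun j => snd (u j))).
  - apply is_lim_Cseq_pair; auto.
  - unfold pser; rewrite (is_lim_seq_unique _ _ Lf), (is_lim_seq_unique _ _ Ls); auto.
Qed.

Lemma Cmod_pser_le a w A : (forall j, 0 <= a j) ->
  is_series (fun j => a j * Cmod w ^ j) A -> Cmod (pser a w) <= A.
Proof.
  intros Ha H; apply (Cmod_lim_le (pser_partial a w)); [apply is_lim_pser; [|exists A]; auto|].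
  exists 0%nat; intros n _; rewrite pser_partial_csum.
  eapply Rle_trans; [apply Cmod_csum_le|].
  eapply Rle_trans; [|apply (sum_f_R0_le_series (fun j => a j * Cmod w ^ j) A); auto].
  - right; apply sum_eq; intros i _; rewrite Cmod_coef_pow, Rabs_pos_eq; auto.
  - intros j; apply Rmult_le_pos; auto; apply pow_le, Cmod_ge_0.
Qed.

Lemma ex_series_pow_le (a : nat -> R) x0 s : (forall j, 0 <= a j) -> 0 <= s <= x0 ->
  ex_series (fun j => a j * x0 ^ j) -> ex_series (fun j => a j * s ^ j).
Proof.
  intros Ha Hs; apply (@ex_series_le R_AbsRing R_CompleteNormedModule); intros j.
  unfold norm; simpl; unfold abs; simpl.
  rewrite Rabs_pos_eq by (apply Rmult_le_pos; auto; apply pow_le; lra).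
  apply Rmult_le_compat_l; auto; apply pow_incr; lra.
Qed.

Lemma Cmod_pser_le_linear (a : nat -> R) (x0 A : R) (w : C) :
  (forall j, 0 <= a j) -> a 0%nat = 0 -> 0 < x0 -> is_series (fun j => a j * x0 ^ j) A ->
  Cmod w <= x0 -> Cmod (pser a w) <= Cmod w / x0 * A.
Proof.
  intros Ha Ha0 Hx0 HA Hw; pose proof (Cmod_ge_0 w).
  apply (Cmod_lim_le (pser_partial a w));
    [apply is_lim_pser, (ex_series_pow_le _ x0); auto; exists A; auto|].
  exists 0%nat; intros N _; rewrite pser_partial_csum.
  eapply Rle_trans; [apply Cmod_csum_le|].
  apply Rle_trans with (sum_f_R0 (fun j => a j * x0 ^ j * (Cmod w / x0)) N).
  - apply sum_Rle; intros [|j] _; rewrite Cmod_coef_pow, Rabs_pos_eq by auto.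
    + rewrite Ha0; lra.
    + simpl; replace (a (S j) * (x0 * x0 ^ j) * (Cmod w / x0))
        with (a (S j) * (Cmod w * x0 ^ j)) by (field; lra).
      apply Rmult_le_compat_l, Rmult_le_compat_l; auto; apply pow_incr; lra.
  - rewrite <- scal_sum; apply Rmult_le_compat_l.
    + apply Rdiv_le_0_compat; lra.
    + apply (sum_f_R0_le_series _ A); auto; intros j; apply Rmult_le_pos; auto; apply pow_le; lra.
Qed.

Lemma is_series_pow_coef a s A : (forall j, 0 <= a j) -> 0 <= s ->
  is_series (fun j => a j * s ^ j) A ->
  forall k, is_series (fun n => pow_coef a k n * s ^ n) (A ^ k).
Proof.
  intros Ha Hs H k; induction k as [|k IH].
  - change (is_lim_seq (sum_n (fun n => pow_coef a 0 n * s ^ n)) 1).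
    apply (is_lim_seq_ext (fun _ => 1)); [|apply is_lim_seq_const].
    intros n; rewrite sum_n_Reals; induction n as [|n IHn]; [simpl; ring|].
    rewrite tech5, <- IHn; simpl; ring.
  - assert (Abs1 : ex_series (fun n => Rabs (a n * s ^ n))).
    { exists A; eapply is_series_ext; [|exact H]; intros j.
      rewrite Rabs_pos_eq; auto; apply Rmult_le_pos; auto; apply pow_le; auto. }
    assert (Abs2 : ex_series (fun n => Rabs (pow_coef a k n * s ^ n))).
    { exists (A ^ k); eapply is_series_ext; [|exact IH]; intros j.
      rewrite Rabs_pos_eq; auto; apply Rmult_le_pos; [apply pow_coef_nonneg|apply pow_le]; auto. }
    eapply is_series_ext; [|exact (is_series_mult _ _ _ _ H IH Abs1 Abs2)].
    intros n; simpl pow_coef; rewrite Rmult_comm, scal_sum; apply sum_eq; intros i Hi.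
    replace (s ^ n) with (s ^ i * s ^ (n - i)) by (rewrite <- pow_add; f_equal; lia); ring.
Qed.

Lemma is_lim_pser_pow a w A : (forall j, 0 <= a j) ->
  is_series (fun j => a j * Cmod w ^ j) A ->
  forall k, is_lim_Cseq (csum (fun n => RtoC (pow_coef a k n) * @pow_n C_Ring w n)%C)
                        (Cpow (pser a w) k).
Proof.
  intros Ha H k; pose proof (is_series_pow_coef a (Cmod w) A Ha (Cmod_ge_0 w) H) as PS.
  induction k as [|k IH].
  - eapply is_lim_Cseq_ext; [|apply is_lim_Cseq_const]; intros N; induction N as [|N IHN].
    + rewrite csum_O; apply injective_projections; simpl; ring.
    + rewrite csum_S, <- IHN; simpl; ring.
  - assert (Au : ex_series (fun j => Cmod (RtoC (a j) * @pow_n C_Ring w j)%C)).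
    { exists A; eapply is_series_ext; [|exact H]; intros j.
      rewrite Cmod_coef_pow, Rabs_pos_eq; auto. }
    assert (Av : ex_series (fun j => Cmod (RtoC (pow_coef a k j) * @pow_n C_Ring w j)%C)).
    { exists (A ^ k); eapply is_series_ext; [|exact (PS k)]; intros j.
      rewrite Cmod_coef_pow, Rabs_pos_eq; auto; apply pow_coef_nonneg; auto. }
    pose proof (is_lim_Cseq_cauchy_product _ _ _ _ Au Av (is_lim_pser a w Ha (ex_intro _ A H)) IH)
      as M.
    simpl Cpow; eapply is_lim_Cseq_ext; [|exact M]; intros N; cbv beta.
    apply csum_ext; intros n _.
    transitivity (csum (fun i => RtoC (a i * pow_coef a k (n - i)) * @pow_n C_Ring w n)%C n).
    + apply csum_ext; intros i Hi.
      rewrite RtoC_mult, (pow_n_Cpow w i), (pow_n_Cpow w (n - i)), (pow_n_Cpow w n).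
      replace (Cpow w n) with (Cpow w i * Cpow w (n - i))%C
        by (rewrite <- Cpow_add_r; f_equal; lia); ring.
    + rewrite csum_RtoC_mult_r; reflexivity.
Qed.

Lemma coef_le_Cmod_lim (f : nat -> R) (x : R) L : (forall n, 0 <= f n) -> 0 <= x ->
  is_lim_Cseq (csum (fun n => RtoC (f n) * Cpow (RtoC x) n)%C) L ->
  forall n, f n * x ^ n <= Cmod L.
Proof.
  intros Hf Hx H n.
  assert (Hb : forall j, 0 <= f j * x ^ j) by (intros; apply Rmult_le_pos; auto; apply pow_le; auto).
  apply Rle_trans with (fst L); [|eapply Rle_trans; [apply Rle_abs|apply Rabs_fst_le_Cmod]].
  assert (HL : is_series (fun j => f j * x ^ j) (fst L)).
  { apply is_lim_Cseq_fst in H; change (is_lim_seq (sum_n (fun j => f j * x ^ j)) (fst L)).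
    eapply is_lim_seq_ext; [|exact H]; intros N; cbv beta.
    rewrite fst_csum, sum_n_Reals; apply sum_eq; intros j _.
    rewrite Cpow_RtoC; simpl; ring. }
  apply Rle_trans with (sum_f_R0 (fun j => f j * x ^ j) n); [|apply sum_f_R0_le_series; auto].
  destruct n as [|n]; simpl; [lra|]; pose proof (cond_pos_sum _ n Hb); lra.
Qed.

Definition is_RInt_2PI (f : R -> C) (l : C) : Prop :=
  @is_RInt C_R_NormedModule f 0 (2 * PI) l.

Lemma is_RInt_2PI_RInt f : @ex_RInt C_R_CompleteNormedModule f 0 (2 * PI) ->
  is_RInt_2PI f (@RInt C_R_CompleteNormedModule f 0 (2 * PI)).
Proof. apply (RInt_correct (V := C_R_CompleteNormedModule)). Qed.

Lemma is_RInt_2PI_ex f l : is_RInt_2PI f l -> @ex_RInt C_R_CompleteNormedModule f 0 (2 * PI).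
Proof. intros H; exists l; exact H. Qed.

Lemma is_RInt_2PI_unique f l :
  is_RInt_2PI f l -> @RInt C_R_CompleteNormedModule f 0 (2 * PI) = l.
Proof. apply (is_RInt_unique (V := C_R_CompleteNormedModule)). Qed.

Lemma is_RInt_2PI_ext f g l : (forall x, f x = g x) -> is_RInt_2PI f l -> is_RInt_2PI g l.
Proof. intros E H; eapply is_RInt_ext; [|exact H]; auto. Qed.

Lemma is_RInt_2PI_plus f g a b :
  is_RInt_2PI f a -> is_RInt_2PI g b -> is_RInt_2PI (fun x => f x + g x)%C (a + b)%C.
Proof. apply (is_RInt_plus f g 0 (2 * PI) a b). Qed.

Lemma is_RInt_2PI_fst f l : is_RInt_2PI f l -> is_RInt (fun x => fst (f x)) 0 (2 * PI) (fst l).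
Proof. apply (is_RInt_fct_extend_fst (U := R_NormedModule) (V := R_NormedModule)). Qed.

Lemma is_RInt_2PI_snd f l : is_RInt_2PI f l -> is_RInt (fun x => snd (f x)) 0 (2 * PI) (snd l).
Proof. apply (is_RInt_fct_extend_snd (U := R_NormedModule) (V := R_NormedModule)). Qed.

Lemma is_RInt_2PI_pair f (a b : R) :
  is_RInt (fun x => fst (f x)) 0 (2 * PI) a -> is_RInt (fun x => snd (f x)) 0 (2 * PI) b ->
  is_RInt_2PI f (a, b).
Proof. apply (is_RInt_fct_extend_pair (U := R_NormedModule) (V := R_NormedModule)). Qed.

Lemma is_RInt_2PI_scal_l c f l :
  is_RInt_2PI f l -> is_RInt_2PI (fun x => c * f x)%C (c * l)%C.
Proof.
  intros H; pose proof (is_RInt_2PI_fst f l H) as H1; pose proof (is_RInt_2PI_snd f l H) as H2.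
  destruct c as [c1 c2], l as [l1 l2].
  change ((c1, c2) * (l1, l2))%C with (c1 * l1 - c2 * l2, c1 * l2 + c2 * l1).
  apply is_RInt_2PI_pair.
  - exact (is_RInt_minus _ _ _ _ _ _ (is_RInt_scal _ _ _ c1 _ H1) (is_RInt_scal _ _ _ c2 _ H2)).
  - exact (is_RInt_plus _ _ _ _ _ _ (is_RInt_scal _ _ _ c1 _ H2) (is_RInt_scal _ _ _ c2 _ H1)).
Qed.

Lemma is_RInt_2PI_const (v : C) : is_RInt_2PI (fun _ => v) (RtoC (2 * PI) * v)%C.
Proof.
  replace (RtoC (2 * PI) * v)%C with (scal (2 * PI - 0) v).
  - apply (@is_RInt_const C_R_NormedModule).
  - destruct v; unfold scal; simpl; unfold prod_scal; simpl; unfold scal; simpl.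
    unfold mult; simpl; unfold RtoC, Cmult; simpl; f_equal; ring.
Qed.

Lemma norm_C_R (z : C) : @norm R_AbsRing C_R_NormedModule z = Cmod z.
Proof.
  unfold norm; simpl; unfold prod_norm, Cmod.
  change (sqrt (Rabs (fst z) ^ 2 + Rabs (snd z) ^ 2) = sqrt (fst z ^ 2 + snd z ^ 2)).
  rewrite !pow2_abs; reflexivity.
Qed.

Lemma Cmod_is_RInt_2PI_le f l M : is_RInt_2PI f l ->
  (forall x, 0 <= x <= 2 * PI -> Cmod (f x) <= M) -> Cmod l <= 2 * PI * M.
Proof.
  intros H HM; rewrite <- norm_C_R; pose proof PI_RGT_0.
  replace (2 * PI * M) with (scal (2 * PI - 0) M) by (unfold scal; simpl; unfold mult; simpl; ring).
  apply (norm_RInt_le f (fun _ => M) 0 (2 * PI) l); [lra| |exact H|].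
  - intros x Hx; rewrite norm_C_R; auto.
  - apply (@is_RInt_const R_NormedModule).
Qed.

(** * Iterated contour integrals *)

Fixpoint on_torus (rs : list R) (ts : list C) : Prop :=
  match rs, ts with
  | [], [] => True
  | r :: rs', t :: ts' => (exists th, t = circ r th) /\ on_torus rs' ts'
  | _, _ => False
  end.

Lemma on_torus_cons r th rs ts : on_torus rs ts -> on_torus (r :: rs) (circ r th :: ts).
Proof. simpl; eauto. Qed.

Fixpoint iter_integrable (rs : list R) (F : list C -> C) : Prop :=
  match rs with
  | [] => True
  | r :: rs' => (forall th, iter_integrable rs' (fun ts => F (circ r th :: ts))) /\
      @ex_RInt C_R_CompleteNormedModule
        (fun th => Cmult (iter_contour rs' (fun ts => F (circ r th :: ts))) (circ' r th)) 0 (2 * PI)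
  end.

Fixpoint torus_length (rs : list R) : R :=
  match rs with [] => 1 | r :: rs' => 2 * PI * Rabs r * torus_length rs' end.

Lemma torus_length_nonneg rs : 0 <= torus_length rs.
Proof.
  induction rs as [|r rs IH]; simpl; [lra|].
  pose proof PI_RGT_0; pose proof (Rabs_pos r); apply Rmult_le_pos; nra.
Qed.

Lemma iter_contour_cons r rs F : iter_contour (r :: rs) F =
  @RInt C_R_CompleteNormedModule
    (fun th => Cmult (iter_contour rs (fun ts => F (circ r th :: ts))) (circ' r th)) 0 (2 * PI).
Proof. reflexivity. Qed.

Lemma iter_contour_ext rs : forall F G, (forall ts, on_torus rs ts -> F ts = G ts) ->
  iter_contour rs F = iter_contour rs G.
Proof.
  induction rs as [|r rs IH]; intros F G H; [apply H; simpl; auto|].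
  rewrite !iter_contour_cons; f_equal; apply functional_extensionality; intros th.
  f_equal; apply IH; intros ts Hts; apply H, on_torus_cons, Hts.
Qed.

Lemma iter_integrable_ext rs : forall F G, (forall ts, on_torus rs ts -> F ts = G ts) ->
  iter_integrable rs F -> iter_integrable rs G.
Proof.
  induction rs as [|r rs IH]; intros F G H HF; [simpl; auto|].
  destruct HF as [HF1 [I HI]]; split.
  - intros th; apply (IH (fun ts => F (circ r th :: ts))); auto.
    intros ts Hts; apply H, on_torus_cons, Hts.
  - exists I; eapply is_RInt_ext; [|exact HI]; intros x _; cbv beta.
    f_equal; apply iter_contour_ext; intros ts Hts; apply H, on_torus_cons, Hts.
Qed.

Lemma iter_contour_plus rs : forall F G, iter_integrable rs F -> iter_integrable rs G ->
  iter_integrable rs (fun ts => F ts + G ts)%C /\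
  iter_contour rs (fun ts => F ts + G ts)%C = (iter_contour rs F + iter_contour rs G)%C.
Proof.
  induction rs as [|r rs IH]; intros F G HF HG; [simpl; auto|].
  destruct HF as [HF1 HF2], HG as [HG1 HG2].
  assert (P : is_RInt_2PI
    (fun th => Cmult (iter_contour rs (fun ts => F (circ r th :: ts) + G (circ r th :: ts))%C)
                     (circ' r th))
    (iter_contour (r :: rs) F + iter_contour (r :: rs) G)%C).
  { eapply is_RInt_2PI_ext;
      [|exact (is_RInt_2PI_plus _ _ _ _ (is_RInt_2PI_RInt _ HF2) (is_RInt_2PI_RInt _ HG2))].
    intros th; simpl; rewrite (proj2 (IH _ _ (HF1 th) (HG1 th))); ring. }
  split; [split; [intros th; apply IH; auto|eapply is_RInt_2PI_ex, P]|].
  rewrite iter_contour_cons; apply is_RInt_2PI_unique, P.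
Qed.

Lemma iter_contour_scal_l rs : forall (c : C) F, iter_integrable rs F ->
  iter_integrable rs (fun ts => c * F ts)%C /\
  iter_contour rs (fun ts => c * F ts)%C = (c * iter_contour rs F)%C.
Proof.
  induction rs as [|r rs IH]; intros c F HF; [simpl; auto|].
  destruct HF as [HF1 HF2].
  assert (P : is_RInt_2PI
    (fun th => Cmult (iter_contour rs (fun ts => c * F (circ r th :: ts))%C) (circ' r th))
    (c * iter_contour (r :: rs) F)%C).
  { eapply is_RInt_2PI_ext; [|exact (is_RInt_2PI_scal_l c _ _ (is_RInt_2PI_RInt _ HF2))].
    intros th; simpl; rewrite (proj2 (IH c _ (HF1 th))); ring. }
  split; [split; [intros th; apply IH; auto|eapply is_RInt_2PI_ex, P]|].
  rewrite iter_contour_cons; apply is_RInt_2PI_unique, P.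
Qed.

Lemma iter_contour_minus rs F G : iter_integrable rs F -> iter_integrable rs G ->
  iter_integrable rs (fun ts => F ts - G ts)%C /\
  iter_contour rs (fun ts => F ts - G ts)%C = (iter_contour rs F - iter_contour rs G)%C.
Proof.
  intros HF HG; destruct (iter_contour_scal_l rs (-1)%C G HG) as [A1 A2].
  destruct (iter_contour_plus rs F _ HF A1) as [B1 B2]; split.
  - eapply iter_integrable_ext; [|exact B1]; intros; simpl; ring.
  - rewrite (iter_contour_ext rs _ (fun ts => F ts + (-1) * G ts)%C), B2, A2; [ring|].
    intros; ring.
Qed.

Lemma Cmod_circ' r th : Cmod (circ' r th) = Rabs r.
Proof.
  unfold Cmod, circ'; simpl; rewrite <- sqrt_Rsqr_abs; f_equal; unfold Rsqr.
  pose proof (sin2_cos2 th) as S; unfold Rsqr in S; nra.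
Qed.

Lemma Cmod_iter_contour_le rs : forall F e, iter_integrable rs F ->
  (forall ts, on_torus rs ts -> Cmod (F ts) <= e) ->
  Cmod (iter_contour rs F) <= torus_length rs * e.
Proof.
  induction rs as [|r rs IH]; intros F e HF H; [simpl; rewrite Rmult_1_l; apply H; simpl; auto|].
  destruct HF as [HF1 HF2]; rewrite iter_contour_cons; simpl torus_length.
  replace (2 * PI * Rabs r * torus_length rs * e)
    with (2 * PI * (torus_length rs * e * Rabs r)) by ring.
  apply (Cmod_is_RInt_2PI_le _ _ _ (is_RInt_2PI_RInt _ HF2)); intros x _.
  rewrite Cmod_mult, Cmod_circ'; apply Rmult_le_compat_r; [apply Rabs_pos|].
  apply IH; [apply HF1|]; intros ts Hts; apply H, on_torus_cons, Hts.
Qed.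

Lemma Cmod_iter_contour_minus_le rs F G e : iter_integrable rs F -> iter_integrable rs G ->
  (forall ts, on_torus rs ts -> Cmod (F ts - G ts)%C <= e) ->
  Cmod (iter_contour rs F - iter_contour rs G)%C <= torus_length rs * e.
Proof.
  intros HF HG H; destruct (iter_contour_minus rs F G HF HG) as [M1 M2].
  rewrite <- M2; apply Cmod_iter_contour_le; auto.
Qed.

Definition unif_cv_on_torus (rs : list R) (F : nat -> list C -> C) (G : list C -> C) : Prop :=
  forall eps, 0 < eps -> exists N0, forall N, (N0 <= N)%nat ->
    forall ts, on_torus rs ts -> Cmod (F N ts - G ts)%C <= eps.

Lemma unif_cv_on_torus_slice r th rs F G : unif_cv_on_torus (r :: rs) F G ->
  unif_cv_on_torus rs (fun N ts => F N (circ r th :: ts)) (fun ts => G (circ r th :: ts)).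
Proof.
  intros HU eps He; destruct (HU eps He) as [N0 HN0]; exists N0; intros N HN ts Hts.
  apply HN0, on_torus_cons; auto.
Qed.

Lemma unif_cv_slice_integrals r rs F G :
  (forall N, iter_integrable (r :: rs) (F N)) ->
  (forall th, iter_integrable rs (fun ts => G (circ r th :: ts))) ->
  unif_cv_on_torus (r :: rs) F G ->
  filterlim (fun N th => Cmult (iter_contour rs (fun ts => F N (circ r th :: ts))) (circ' r th))
    eventually (@locally (fct_UniformSpace R C_R_CompleteNormedModule)
                  (fun th => Cmult (iter_contour rs (fun ts => G (circ r th :: ts))) (circ' r th))).
Proof.
  intros HF HG HU; apply filterlim_locally; intros eps; pose proof (cond_pos eps).
  pose proof (torus_length_nonneg rs); pose proof (Rabs_pos r).
  set (e := eps / (2 * (torus_length rs * Rabs r + 1))).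
  assert (He : 0 < e) by (apply Rdiv_lt_0_compat; nra).
  destruct (HU e He) as [N0 HN0]; exists N0; intros N HN th.
  apply (@norm_compat1 R_AbsRing C_R_NormedModule); rewrite norm_C_R.
  change (Cmod (iter_contour rs (fun ts => F N (circ r th :: ts)) * circ' r th
                - iter_contour rs (fun ts => G (circ r th :: ts)) * circ' r th)%C < eps).
  set (IF := iter_contour rs (fun ts => F N (circ r th :: ts))).
  set (IG := iter_contour rs (fun ts => G (circ r th :: ts))).
  replace (IF * circ' r th - IG * circ' r th)%C with ((IF - IG) * circ' r th)%C by ring.
  rewrite Cmod_mult, Cmod_circ'; apply Rle_lt_trans with (torus_length rs * e * Rabs r).
  - apply Rmult_le_compat_r; auto; apply Cmod_iter_contour_minus_le; [apply (HF N)|apply HG|].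
    intros ts Hts; apply HN0, on_torus_cons; auto.
  - replace (torus_length rs * e * Rabs r) with (eps / 2 - e) by (unfold e; field; nra); lra.
Qed.

Lemma iter_contour_unif_lim rs : forall F G, (forall N, iter_integrable rs (F N)) ->
  unif_cv_on_torus rs F G ->
  iter_integrable rs G /\ is_lim_Cseq (fun N => iter_contour rs (F N)) (iter_contour rs G).
Proof.
  induction rs as [|r rs IH]; intros F G HF HU.
  - split; [simpl; auto|]; intros eps He; destruct (HU (eps / 2) ltac:(lra)) as [N0 HN0].
    exists N0; intros n Hn; specialize (HN0 n Hn [] I); simpl; lra.
  - assert (Hin := fun th => IH _ _ (fun N => proj1 (HF N) th) (unif_cv_on_torus_slice r th rs F G HU)).
    assert (Hh : forall N, @is_RInt C_R_CompleteNormedModule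
      (fun th => Cmult (iter_contour rs (fun ts => F N (circ r th :: ts))) (circ' r th)) 0 (2 * PI)
      (iter_contour (r :: rs) (F N)))
      by (intros N; apply is_RInt_2PI_RInt, (HF N)).
    destruct (filterlim_RInt _ 0 (2 * PI) eventually _ _ _ Hh
                (unif_cv_slice_integrals r rs F G HF (fun th => proj1 (Hin th)) HU))
      as [I [L1 L2]].
    split; [split; [apply Hin|exists I; exact L2]|].
    replace (iter_contour (r :: rs) G) with I by (symmetry; exact (is_RInt_2PI_unique _ I L2)).
    apply filterlim_is_lim_Cseq, L1.
Qed.

Lemma unif_cv_on_torus_Mtest rs (u : list C -> nat -> C) (L : list C -> C) (b : nat -> R) B :
  is_series b B -> (forall ts j, on_torus rs ts -> Cmod (u ts j) <= b j) ->
  (forall ts, on_torus rs ts -> is_lim_Cseq (csum (u ts)) (L ts)) ->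
  unif_cv_on_torus rs (fun J ts => csum (u ts) J) L.
Proof.
  intros HB Hb HL eps He; destruct (is_series_sum_f_R0 b B HB eps He) as [N HN].
  exists N; intros J HJ ts Hts; rewrite <- Cmod_opp.
  replace (- (csum (u ts) J - L ts))%C with (L ts - csum (u ts) J)%C by ring.
  eapply Rle_trans; [apply (Cmod_series_tail_le (u ts) b B); auto|].
  specialize (HN J HJ); apply Rabs_def2 in HN; lra.
Qed.

Lemma iter_contour_csum rs (G : nat -> list C -> C) J : (forall j, iter_integrable rs (G j)) ->
  iter_integrable rs (fun ts => csum (fun j => G j ts) J) /\
  iter_contour rs (fun ts => csum (fun j => G j ts) J) = csum (fun j => iter_contour rs (G j)) J.
Proof.
  intros HG; induction J as [|J [I1 I2]].
  - rewrite csum_O; split.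
    + eapply iter_integrable_ext; [|apply (HG 0%nat)]; intros; rewrite csum_O; auto.
    + apply iter_contour_ext; intros; rewrite csum_O; auto.
  - destruct (iter_contour_plus rs _ _ I1 (HG (S J))) as [P1 P2]; split.
    + eapply iter_integrable_ext; [|exact P1]; intros; rewrite csum_S; auto.
    + rewrite (iter_contour_ext _ _ (fun ts => csum (fun j => G j ts) J + G (S J) ts)%C),
        P2, I2, csum_S; auto.
      intros; rewrite csum_S; auto.
Qed.

Fixpoint prod_from (h : nat -> C -> C) (s : nat) (ts : list C) : C :=
  match ts with [] => 1%C | t :: ts' => (h s t * prod_from h (S s) ts')%C end.

Lemma iter_contour_cons_mult r rs F g I : iter_integrable rs F ->
  is_RInt_2PI (fun th => g (circ r th) * circ' r th)%C I ->
  iter_integrable (r :: rs) (fun ts => g (hd (RtoC 0) ts) * F (tl ts))%C /\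
  iter_contour (r :: rs) (fun ts => g (hd (RtoC 0) ts) * F (tl ts))%C = (I * iter_contour rs F)%C.
Proof.
  intros HF Hg.
  assert (P : is_RInt_2PI
    (fun th => Cmult (iter_contour rs (fun ts => g (circ r th) * F ts)%C) (circ' r th))
    (iter_contour rs F * I)%C).
  { eapply is_RInt_2PI_ext; [|exact (is_RInt_2PI_scal_l (iter_contour rs F) _ _ Hg)].
    intros th; simpl; rewrite (proj2 (iter_contour_scal_l rs (g (circ r th)) F HF)); ring. }
  split.
  - split; [intros th; apply (iter_contour_scal_l rs (g (circ r th)) F HF)|].
    eapply is_RInt_2PI_ex, P.
  - rewrite iter_contour_cons; simpl; rewrite (is_RInt_2PI_unique _ _ P); ring.
Qed.

(** Fubini for functions of separated variables on the torus. *)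
Lemma iter_contour_prod_from (r : nat -> R) (h : nat -> C -> C) (I : nat -> C) L : forall a,
  (forall i, (a <= i < a + L)%nat ->
     is_RInt_2PI (fun th => h i (circ (r i) th) * circ' (r i) th)%C (I i)) ->
  iter_integrable (map r (seq a L)) (prod_from h a) /\
  iter_contour (map r (seq a L)) (prod_from h a) = Cprod (map I (seq a L)).
Proof.
  induction L as [|L IH]; intros a H; [simpl; auto|].
  destruct (IH (S a)) as [I1 I2]; [intros i Hi; apply H; lia|].
  destruct (iter_contour_cons_mult (r a) _ _ (h a) (I a) I1) as [S1 S2]; [apply H; lia|].
  simpl seq; simpl map; split.
  - eapply iter_integrable_ext; [|exact S1]; intros [|t ts] Hts; [destruct Hts|reflexivity].
  - rewrite (iter_contour_ext _ _ (fun ts => h a (hd (RtoC 0) ts) * prod_from h (S a) (tl ts))%C),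
      S2, I2; [reflexivity|].
    intros [|t ts] Hts; [destruct Hts|reflexivity].
Qed.

Lemma on_torus_length rs : forall ts, on_torus rs ts -> length ts = length rs.
Proof.
  induction rs as [|r rs IH]; intros [|t ts] H; simpl in *; try tauto.
  destruct H; f_equal; auto.
Qed.

Lemma Cprod_map_nth_prod_from (g : nat -> C -> C) : forall ts s,
  Cprod (map (fun j => g (s + j)%nat (nth j ts (RtoC 1))) (seq 0 (length ts))) = prod_from g s ts.
Proof.
  induction ts as [|t ts IH]; intros s; [reflexivity|].
  simpl length; cbn [seq map]; rewrite <- seq_shift, map_map.
  unfold Cprod; cbn [fold_right]; simpl prod_from; rewrite Nat.add_0_r; f_equal.
  rewrite <- (IH (S s)); unfold Cprod; f_equal; apply map_ext; intros j; simpl; f_equal; lia.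
Qed.

(** * Integrals of monomials over a circle *)

Lemma circ_mult a b x y : (circ a x * circ b y)%C = circ (a * b) (x + y).
Proof. unfold circ, Cmult; simpl; rewrite cos_plus, sin_plus; f_equal; ring. Qed.

Lemma circ_pow a x n : Cpow (circ a x) n = circ (a ^ n) (INR n * x).
Proof.
  induction n as [|n IH].
  - unfold circ; simpl; rewrite Rmult_0_l, cos_0, sin_0.
    apply injective_projections; simpl; ring.
  - simpl Cpow; rewrite IH, circ_mult, S_INR; f_equal; simpl; ring.
Qed.

Lemma circ_inv a x : a <> 0 -> (/ circ a x)%C = circ (/ a) (- x).
Proof.
  intros Ha; unfold circ, Cinv; simpl; rewrite cos_neg, sin_neg.
  pose proof (sin2_cos2 x) as S; unfold Rsqr in S.
  replace (a * cos x * (a * cos x * 1) + a * sin x * (a * sin x * 1)) with (a * a) by nra.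
  f_equal; field; auto.
Qed.

Lemma circ'_eq a x : circ' a x = (Ci * circ a x)%C.
Proof. unfold circ', circ, Ci, Cmult; simpl; f_equal; ring. Qed.

Lemma Cmod_circ r th : 0 <= r -> Cmod (circ r th) = r.
Proof.
  intros Hr; unfold Cmod, circ; simpl.
  pose proof (sin2_cos2 th) as S; unfold Rsqr in S.
  apply sqrt_lem_1; [nra|auto|].
  transitivity (r * r * (sin th * sin th + cos th * cos th)); [rewrite S|]; ring.
Qed.

Lemma circ_neq0 r th : 0 < r -> circ r th <> 0%C.
Proof. intros Hr E; pose proof (Cmod_circ r th ltac:(lra)); rewrite E, Cmod_0 in H; lra. Qed.

Lemma Cmod_inv_circ r th : 0 < r -> Cmod (/ circ r th)%C = / r.
Proof. intros Hr; rewrite Cmod_inv, Cmod_circ by (lra || apply circ_neq0; auto); auto. Qed.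

Lemma cos_sin_2PI_int (n j : nat) :
  cos (2 * PI * (INR n - INR j)) = 1 /\ sin (2 * PI * (INR n - INR j)) = 0.
Proof.
  destruct (Compare_dec.le_lt_dec j n) as [Hle|Hlt].
  - rewrite <- minus_INR by auto.
    pose proof (cos_period 0 (n - j)) as A; pose proof (sin_period 0 (n - j)) as B.
    rewrite Rplus_0_l, cos_0 in A; rewrite Rplus_0_l, sin_0 in B.
    replace (2 * PI * INR (n - j)) with (2 * INR (n - j) * PI) by ring; auto.
  - replace (INR n - INR j) with (- INR (j - n)) by (rewrite minus_INR by lia; ring).
    pose proof (cos_period 0 (j - n)) as A; pose proof (sin_period 0 (j - n)) as B.
    rewrite Rplus_0_l, cos_0 in A; rewrite Rplus_0_l, sin_0 in B.
    replace (2 * PI * - INR (j - n)) with (- (2 * INR (j - n) * PI)) by ring.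
    rewrite cos_neg, sin_neg, A, B; split; ring.
Qed.

(** Both components are derivatives of [2 PI]-periodic functions. *)
Lemma is_RInt_2PI_wave (c a : R) : a <> 0 -> cos (2 * PI * a) = 1 -> sin (2 * PI * a) = 0 ->
  is_RInt_2PI (fun th => (Ci * circ c (a * th))%C) 0%C.
Proof.
  intros Ha Hc Hs; change (RtoC 0) with ((0, 0) : C); apply is_RInt_2PI_pair.
  - assert (D : is_RInt (fun th => - (c * sin (a * th))) 0 (2 * PI)
                  (minus (c * cos (a * (2 * PI)) / a) (c * cos (a * 0) / a))).
    { apply (@is_RInt_derive R_CompleteNormedModule (fun th => c * cos (a * th) / a)).
      - intros x _; auto_derive; auto; field; auto.
      - intros x _; apply (@ex_derive_continuous R_AbsRing R_NormedModule); auto_derive; auto. }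
    replace (minus (c * cos (a * (2 * PI)) / a) (c * cos (a * 0) / a)) with 0 in D.
    + eapply is_RInt_ext; [|exact D]; intros x _; unfold circ, Ci, Cmult; simpl; ring.
    + unfold minus, plus, opp; simpl; rewrite Rmult_0_r, cos_0.
      replace (a * (2 * PI)) with (2 * PI * a) by ring; rewrite Hc; field; auto.
  - assert (D : is_RInt (fun th => c * cos (a * th)) 0 (2 * PI)
                  (minus (c * sin (a * (2 * PI)) / a) (c * sin (a * 0) / a))).
    { apply (@is_RInt_derive R_CompleteNormedModule (fun th => c * sin (a * th) / a)).
      - intros x _; auto_derive; auto; field; auto.
      - intros x _; apply (@ex_derive_continuous R_AbsRing R_NormedModule); auto_derive; auto. }
    replace (minus (c * sin (a * (2 * PI)) / a) (c * sin (a * 0) / a)) with 0 in D.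
    + eapply is_RInt_ext; [|exact D]; intros x _; unfold circ, Ci, Cmult; simpl; ring.
    + unfold minus, plus, opp; simpl; rewrite Rmult_0_r, sin_0.
      replace (a * (2 * PI)) with (2 * PI * a) by ring; rewrite Hs; field; auto.
Qed.

Definition laurent_mono (n j : nat) (t : C) : C := (Cpow t n * Cpow (/ t) j * / t)%C.

Lemma is_RInt_2PI_laurent_mono (rho : R) (n j : nat) : 0 < rho ->
  is_RInt_2PI (fun th => laurent_mono n j (circ rho th) * circ' rho th)%C
    (if Nat.eqb n j then (RtoC (2 * PI) * Ci)%C else 0%C).
Proof.
  intros Hr.
  assert (E : forall th, (laurent_mono n j (circ rho th) * circ' rho th)%C =
                         (Ci * circ (rho ^ n * (/ rho) ^ j) ((INR n - INR j) * th))%C).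
  { intros th; unfold laurent_mono; rewrite circ_inv, !circ_pow, circ'_eq by lra.
    replace (circ (rho ^ n) (INR n * th) * circ ((/ rho) ^ j) (INR j * - th) * circ (/ rho) (- th)
               * (Ci * circ rho th))%C
      with (Ci * ((circ (rho ^ n) (INR n * th) * circ ((/ rho) ^ j) (INR j * - th))
                  * (circ (/ rho) (- th) * circ rho th)))%C by ring.
    rewrite !circ_mult; f_equal; f_equal; [field; lra|ring]. }
  destruct (Nat.eqb_spec n j) as [<-|Hnj].
  - eapply is_RInt_2PI_ext; [|apply is_RInt_2PI_const]; intros th; rewrite E.
    rewrite Rminus_diag, Rmult_0_l, <- Rpow_mult_distr, Rinv_r, pow1 by lra.
    unfold circ; rewrite cos_0, sin_0; unfold Ci, Cmult; simpl.
    apply injective_projections; simpl; ring.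
  - eapply is_RInt_2PI_ext; [|apply is_RInt_2PI_wave]; try apply cos_sin_2PI_int.
    + intros th; rewrite E; reflexivity.
    + intros Hc; apply Hnj, INR_eq; lra.
Qed.

Lemma iter_contour_single rho f I :
  is_RInt_2PI (fun th => f (circ rho th) * circ' rho th)%C I ->
  iter_integrable [rho] (fun ts => f (hd (RtoC 0) ts)) /\
  iter_contour [rho] (fun ts => f (hd (RtoC 0) ts)) = I.
Proof.
  intros H; split; [split; [simpl; auto|eapply is_RInt_2PI_ex, H]|].
  rewrite iter_contour_cons; apply (is_RInt_2PI_unique _ _ H).
Qed.

Lemma is_RInt_2PI_iter_contour_single rho f :
  iter_integrable [rho] (fun ts => f (hd (RtoC 0) ts)) ->
  is_RInt_2PI (fun th => f (circ rho th) * circ' rho th)%C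
    (iter_contour [rho] (fun ts => f (hd (RtoC 0) ts))).
Proof. intros [_ H]; apply (is_RInt_2PI_RInt _ H). Qed.

(** [coef_integrand q n k t * dt] integrates to [2 PI i] times the coefficient of
    [t ^ (- n)] in [pser q (/ t) ^ k]. *)
Definition coef_integrand (q : nat -> R) (n k : nat) (t : C) : C :=
  (Cpow t n * Cpow (pser q (/ t)) k * / t)%C.

Lemma is_lim_coef_integrand (q : nat -> R) (rho Q : R) (n k : nat) th :
  0 < rho -> (forall j, 0 <= q j) -> is_series (fun j => q j * (/ rho) ^ j) Q ->
  is_lim_Cseq (csum (fun j => RtoC (pow_coef q k j) * laurent_mono n j (circ rho th))%C)
              (coef_integrand q n k (circ rho th)).
Proof.
  intros Hr Hq HQ; set (t := circ rho th).
  assert (Hw : is_series (fun j => q j * Cmod (/ t)%C ^ j) Q)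
    by (unfold t; rewrite Cmod_inv_circ; auto).
  replace (coef_integrand q n k t) with (Cpow t n * / t * Cpow (pser q (/ t)) k)%C
    by (unfold coef_integrand; ring).
  eapply is_lim_Cseq_ext;
    [|exact (is_lim_Cseq_scal_l (Cpow t n * / t)%C _ _ (is_lim_pser_pow q _ Q Hq Hw k))].
  intros J; cbv beta; rewrite <- csum_scal_l; apply csum_ext; intros j _.
  unfold laurent_mono; rewrite (pow_n_Cpow (/ t) j); ring.
Qed.

Lemma csum_zero N : csum (fun _ => 0%C) N = 0%C.
Proof. induction N as [|N IH]; [rewrite csum_O|rewrite csum_S, IH; ring]; auto. Qed.

Lemma csum_indicator (a : nat -> R) (n : nat) (V : C) J : (n <= J)%nat ->
  csum (fun j => RtoC (a j) * (if Nat.eqb n j then V else 0%C))%C J = (RtoC (a n) * V)%C.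
Proof.
  induction J as [|J IH]; intros HnJ.
  - rewrite csum_O; replace n with 0%nat by lia; reflexivity.
  - rewrite csum_S; destruct (Nat.eqb_spec n (S J)) as [->|Hn]; [|rewrite IH by lia; ring].
    rewrite (csum_ext _ (fun _ => 0%C)), csum_zero; [ring|].
    intros j Hj; destruct (Nat.eqb_spec (S J) j); [lia|ring].
Qed.

Lemma on_torus_single rho ts : on_torus [rho] ts -> exists th, ts = [circ rho th].
Proof. destruct ts as [|t [|]]; simpl; try tauto; intros [[th ->] _]; eauto. Qed.

Lemma is_RInt_2PI_coef_integrand (q : nat -> R) (rho Q : R) (n k : nat) :
  0 < rho -> (forall j, 0 <= q j) -> is_series (fun j => q j * (/ rho) ^ j) Q ->
  is_RInt_2PI (fun th => coef_integrand q n k (circ rho th) * circ' rho th)%C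
              (RtoC (2 * PI) * Ci * RtoC (pow_coef q k n))%C.
Proof.
  intros Hr Hq HQ; set (c := (RtoC (2 * PI) * Ci)%C).
  set (u := fun ts j => (RtoC (pow_coef q k j) * laurent_mono n j (hd (RtoC 0) ts))%C).
  assert (Hmono : forall j,
    iter_integrable [rho] (fun ts => u ts j) /\
    iter_contour [rho] (fun ts => u ts j) = (RtoC (pow_coef q k j) * if Nat.eqb n j then c else 0)%C).
  { intros j; apply (iter_contour_single rho (fun t => RtoC (pow_coef q k j) * laurent_mono n j t)%C).
    eapply is_RInt_2PI_ext; [|exact (is_RInt_2PI_scal_l _ _ _ (is_RInt_2PI_laurent_mono rho n j Hr))].
    intros th; cbv beta; ring. }
  destruct (iter_contour_unif_lim [rho] (fun J ts => csum (u ts) J)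
              (fun ts => coef_integrand q n k (hd (RtoC 0) ts))) as [L1 L2].
  - intros J; apply (iter_contour_csum [rho] (fun j ts => u ts j)); intros j; apply Hmono.
  - apply (unif_cv_on_torus_Mtest [rho] u _ (fun j => pow_coef q k j * (/ rho) ^ j * (rho ^ n * / rho))
             (Q ^ k * (rho ^ n * / rho))).
    + apply is_series_scal_r, is_series_pow_coef; auto.
      apply Rlt_le, Rinv_0_lt_compat; auto.
    + intros ts j [th ->]%on_torus_single; unfold u, laurent_mono; simpl hd.
      rewrite !Cmod_mult, Cmod_R, !Cmod_pow, Cmod_inv_circ, Cmod_circ, Rabs_pos_eq by
        (auto; lra || apply pow_coef_nonneg; auto).
      right; ring.
    + intros ts [th ->]%on_torus_single; apply (is_lim_coef_integrand q rho Q); auto.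
  - replace (c * RtoC (pow_coef q k n))%C
      with (iter_contour [rho] (fun ts => coef_integrand q n k (hd (RtoC 0) ts))).
    { apply (is_RInt_2PI_iter_contour_single rho (coef_integrand q n k)), L1. }
    apply (is_lim_Cseq_unique (fun J => iter_contour [rho] (fun ts => csum (u ts) J))); auto.
    apply (is_lim_Cseq_ext_loc (fun _ => (c * RtoC (pow_coef q k n))%C) _ _ n);
      [|apply is_lim_Cseq_const].
    intros J HJ; symmetry.
    change (iter_contour [rho] (fun ts => csum (fun j => u ts j) J) = (c * RtoC (pow_coef q k n))%C).
    rewrite (proj2 (iter_contour_csum [rho] (fun j ts => u ts j) J
                                   (fun j => proj1 (Hmono j)))).
    rewrite (csum_ext _ _ _ (fun j _ => proj2 (Hmono j))), csum_indicator by auto; ring.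
Qed.

Lemma Rprod_pos l : (forall x, In x l -> 0 < x) -> 0 < Rprod l.
Proof.
  induction l as [|x l IH]; intros H; unfold Rprod in *; simpl; [lra|].
  apply Rmult_lt_0_compat; [apply H; simpl; auto|apply IH; intros; apply H; simpl; auto].
Qed.

Lemma Rprod_inv_pos l : (forall x, In x l -> 0 < x) -> 0 < Rprod (map Rinv l).
Proof.
  intros H; apply Rprod_pos; intros x Hx; apply in_map_iff in Hx.
  destruct Hx as [y [<- Hy]]; apply Rinv_0_lt_compat, H, Hy.
Qed.

Lemma Cmod_Cprod_on_torus rs ts : on_torus rs ts -> (forall x, In x rs -> 0 < x) ->
  Cmod (Cprod ts) = Rprod rs.
Proof.
  revert ts; induction rs as [|r rs IH]; intros [|t ts] H Hp; simpl in *; try tauto.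
  - apply Cmod_1.
  - destruct H as [[th ->] H]; unfold Cprod, Rprod in *; simpl.
    rewrite Cmod_mult, Cmod_circ, IH; auto; apply Rlt_le; auto.
Qed.

Lemma Cmod_Cprod_inv_on_torus rs ts : on_torus rs ts -> (forall x, In x rs -> 0 < x) ->
  Cmod (Cprod (map Cinv ts)) = Rprod (map Rinv rs).
Proof.
  revert ts; induction rs as [|r rs IH]; intros [|t ts] H Hp; simpl in *; try tauto.
  - apply Cmod_1.
  - destruct H as [[th ->] H]; unfold Cprod, Rprod in *; simpl.
    rewrite Cmod_mult, Cmod_inv_circ, IH; auto.
Qed.

Lemma torus_length_Rprod_inv rs : (forall x, In x rs -> 0 < x) ->
  torus_length rs * Rprod (map Rinv rs) = (2 * PI) ^ length rs.
Proof.
  induction rs as [|r rs IH]; intros H; unfold Rprod in *; simpl; [ring|].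
  rewrite <- IH by (intros; apply H; simpl; auto).
  specialize (H r (or_introl eq_refl)); rewrite Rabs_pos_eq by lra; field; lra.
Qed.

Lemma Cmod_prod_from_le (r : nat -> R) (h : nat -> C -> C) (beta : nat -> R) L : forall a ts,
  on_torus (map r (seq a L)) ts ->
  (forall i th, (a <= i < a + L)%nat -> Cmod (h i (circ (r i) th)) <= beta i) ->
  Cmod (prod_from h a ts) <= Rprod (map beta (seq a L)).
Proof.
  induction L as [|L IH]; intros a [|t ts] Hts H; simpl in Hts; try tauto.
  - simpl; rewrite Cmod_1; unfold Rprod; simpl; lra.
  - destruct Hts as [[th ->] Hts]; simpl; unfold Rprod at 1; simpl.
    fold (Rprod (map beta (seq (S a) L))); rewrite Cmod_mult.
    apply Rmult_le_compat; try apply Cmod_ge_0; [apply H; lia|].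
    apply IH; auto; intros i th' Hi; apply H; lia.
Qed.

Lemma prod_from_separate (n k : nat) (g : nat -> C -> C) : forall ts s,
  prod_from (fun i t => Cpow t n * Cpow (g i t) k * / t)%C s ts =
  (Cpow (Cprod ts) n * Cpow (prod_from g s ts) k * Cprod (map Cinv ts))%C.
Proof.
  induction ts as [|t ts IH]; intros s.
  - simpl; unfold Cprod; simpl; rewrite !Cpow_1_l; ring.
  - simpl prod_from; rewrite IH; unfold Cprod; simpl.
    fold (Cprod ts); fold (Cprod (map Cinv ts)); rewrite !Cpow_mult_l; ring.
Qed.

Lemma Cprod_map_RtoC_mult (c : C) (f : nat -> R) l :
  Cprod (map (fun i => c * RtoC (f i)) l)%C = (Cpow c (length l) * RtoC (Rprod (map f l)))%C.
Proof.
  induction l as [|i l IH]; unfold Cprod, Rprod in *; simpl; [ring|].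
  rewrite IH, RtoC_mult; ring.
Qed.


Lemma Cmod_2PI_Ci : Cmod (RtoC (2 * PI) * Ci)%C = 2 * PI.
Proof. rewrite Cmod_mult, Cmod_R, Cmod_Ci, Rabs_pos_eq; [ring|pose proof PI_RGT_0; lra]. Qed.

(** * The iterated integrals of the powers of the kernel *)

Section Kernel.

Variables (m : nat) (p : nat -> nat -> R) (r : nat -> R) (Q : nat -> R).
Hypothesis Hp1 : forall j, 0 <= p 1%nat j.
Hypothesis Hp : forall i j, (2 <= i <= m)%nat -> 0 <= p i j.
Hypothesis Hr : forall i, (2 <= i <= m)%nat -> 0 < r i.
Hypothesis HQ : forall i, (2 <= i <= m)%nat -> is_series (fun j => p i j * (/ r i) ^ j) (Q i).

Definition radii : list R := map r (seq 2 (m - 1)).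

Definition inv_factor (ts : list C) : C :=
  Cprod (map (fun j => pser (p (j + 2)%nat) (Cinv (nth j ts (RtoC 1)))) (seq 0 (m - 1))).

Definition kernel (z : C) (ts : list C) : C := (pser (p 1%nat) (z * Cprod ts) * inv_factor ts)%C.

Definition kernel_pow_integrand (z : C) (k : nat) (ts : list C) : C :=
  (Cpow (kernel z ts) k * Cprod (map Cinv ts))%C.

Lemma integrand_kernel z ts : integrand m p z ts = (/ (1 - kernel z ts) * Cprod (map Cinv ts))%C.
Proof. reflexivity. Qed.

Lemma radii_pos : forall x, In x radii -> 0 < x.
Proof.
  intros x Hx; apply in_map_iff in Hx; destruct Hx as [i [<- Hi]].
  apply in_seq in Hi; apply Hr; lia.
Qed.

Lemma inv_factor_prod_from ts : on_torus radii ts ->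
  inv_factor ts = prod_from (fun i t => pser (p i) (/ t)%C) 2 ts.
Proof.
  intros H; rewrite <- Cprod_map_nth_prod_from; unfold inv_factor.
  rewrite (on_torus_length _ _ H); unfold radii; rewrite length_map, length_seq.
  f_equal; apply map_ext; intros j; do 2 f_equal; lia.
Qed.

Lemma Cmod_inv_factor_le ts : on_torus radii ts ->
  Cmod (inv_factor ts) <= Rprod (map Q (seq 2 (m - 1))).
Proof.
  intros H; rewrite (inv_factor_prod_from ts H).
  apply (Cmod_prod_from_le r _ Q (m - 1) 2 ts H); intros i th Hi.
  apply Cmod_pser_le; [intros; apply Hp; lia|].
  rewrite Cmod_inv_circ by (apply Hr; lia); apply HQ; lia.
Qed.

Lemma prod_from_coef_integrand ts n k : on_torus radii ts ->
  prod_from (fun i => coef_integrand (p i) n k) 2 ts =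
  (Cpow (Cprod ts) n * Cpow (inv_factor ts) k * Cprod (map Cinv ts))%C.
Proof.
  intros H; rewrite (inv_factor_prod_from ts H), <- prod_from_separate; reflexivity.
Qed.

(** The variables separate, and each circle contributes [2 PI i] times a coefficient. *)
Lemma iter_contour_prod_coef_integrand n k :
  iter_integrable radii (prod_from (fun i => coef_integrand (p i) n k) 2) /\
  iter_contour radii (prod_from (fun i => coef_integrand (p i) n k) 2) =
  (Cpow (RtoC (2 * PI) * Ci) (m - 1)
   * RtoC (Rprod (map (fun i => pow_coef (p i) k n) (seq 2 (m - 1)))))%C.
Proof.
  destruct (iter_contour_prod_from r (fun i => coef_integrand (p i) n k)
              (fun i => RtoC (2 * PI) * Ci * RtoC (pow_coef (p i) k n))%C (m - 1) 2) as [I1 I2].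
  - intros i Hi; apply (is_RInt_2PI_coef_integrand (p i) (r i) (Q i));
      [apply Hr|intros; apply Hp|apply HQ]; lia.
  - split; [exact I1|]; unfold radii; rewrite I2, Cprod_map_RtoC_mult, length_seq; reflexivity.
Qed.

Definition kernel_pow_term (z : C) (k : nat) (ts : list C) (n : nat) : C :=
  (RtoC (pow_coef (p 1%nat) k n) * Cpow z n * prod_from (fun i => coef_integrand (p i) n k) 2 ts)%C.

Lemma Cmod_kernel_pow_term_le z k ts n : on_torus radii ts ->
  Cmod (kernel_pow_term z k ts n) <=
  pow_coef (p 1%nat) k n * (Cmod z * Rprod radii) ^ n
  * (Rprod (map Q (seq 2 (m - 1))) ^ k * Rprod (map Rinv radii)).
Proof.
  intros Hts; pose proof radii_pos as Hpos.
  assert (HIV : 0 < Rprod (map Rinv radii)) by (apply Rprod_inv_pos; auto).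
  assert (HQk : Cmod (inv_factor ts) ^ k <= Rprod (map Q (seq 2 (m - 1))) ^ k)
    by (apply pow_incr; split; [apply Cmod_ge_0|apply Cmod_inv_factor_le; auto]).
  unfold kernel_pow_term; rewrite prod_from_coef_integrand by auto.
  rewrite !Cmod_mult, !Cmod_pow, Cmod_R, Rabs_pos_eq by (apply pow_coef_nonneg, Hp1).
  rewrite (Cmod_Cprod_on_torus _ ts Hts Hpos), (Cmod_Cprod_inv_on_torus _ ts Hts Hpos).
  rewrite Rpow_mult_distr.
  pose proof (pow_coef_nonneg _ Hp1 k n); pose proof (pow_le (Cmod z) n (Cmod_ge_0 z)).
  pose proof (pow_le (Rprod radii) n (Rlt_le _ _ (Rprod_pos _ Hpos))).
  apply Rle_trans with (pow_coef (p 1%nat) k n * Cmod z ^ n * Rprod radii ^ n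
                        * Rprod (map Rinv radii) * Cmod (inv_factor ts) ^ k); [right; ring|].
  apply Rle_trans with (pow_coef (p 1%nat) k n * Cmod z ^ n * Rprod radii ^ n
                        * Rprod (map Rinv radii) * Rprod (map Q (seq 2 (m - 1))) ^ k); [|right; ring].
  apply Rmult_le_compat_l; auto; repeat apply Rmult_le_pos; lra.
Qed.

(** Expanding [pser (p 1) (z * Cprod ts) ^ k] in powers of [z]; the majorant is
    the same expansion evaluated at [|z| * Rprod radii]. *)
Lemma unif_cv_kernel_pow z A k :
  is_series (fun j => p 1%nat j * (Cmod z * Rprod radii) ^ j) A ->
  unif_cv_on_torus radii (fun N ts => csum (kernel_pow_term z k ts) N) (kernel_pow_integrand z k).
Proof.
  intros HA; pose proof radii_pos as Hpos.
  apply (unif_cv_on_torus_Mtest _ _ _ _ _ (is_series_scal_r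
           (Rprod (map Q (seq 2 (m - 1))) ^ k * Rprod (map Rinv radii)) _ _
           (is_series_pow_coef _ _ _ Hp1
              (Rmult_le_pos _ _ (Cmod_ge_0 z) (Rlt_le _ _ (Rprod_pos _ Hpos))) HA k))).
  - intros ts n Hts; apply Cmod_kernel_pow_term_le, Hts.
  - intros ts Hts; set (w := (z * Cprod ts)%C).
    assert (Hw : is_series (fun j => p 1%nat j * Cmod w ^ j) A).
    { unfold w; rewrite Cmod_mult, (Cmod_Cprod_on_torus _ ts Hts Hpos); exact HA. }
    replace (kernel_pow_integrand z k ts)
      with (Cpow (inv_factor ts) k * Cprod (map Cinv ts) * Cpow (pser (p 1%nat) w) k)%C
      by (unfold kernel_pow_integrand, kernel; fold w; rewrite Cpow_mult_l; ring).
    eapply is_lim_Cseq_ext;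
      [|exact (is_lim_Cseq_scal_l _ _ _ (is_lim_pser_pow _ w A Hp1 Hw k))].
    intros N; cbv beta; rewrite <- csum_scal_l; apply csum_ext; intros n _.
    unfold kernel_pow_term; rewrite prod_from_coef_integrand by auto.
    unfold w; rewrite (pow_n_Cpow (z * Cprod ts)%C n), Cpow_mult_l; ring.
Qed.

Lemma iter_contour_kernel_pow z A k : (1 <= m)%nat ->
  is_series (fun j => p 1%nat j * (Cmod z * Rprod radii) ^ j) A ->
  iter_integrable radii (kernel_pow_integrand z k) /\
  is_lim_Cseq (csum (fun n => RtoC (diag_coef m p k n) * Cpow z n)%C)
    (/ Cpow (RtoC (2 * PI) * Ci) (m - 1) * iter_contour radii (kernel_pow_integrand z k))%C.
Proof.
  intros Hm HA; set (c := Cpow (RtoC (2 * PI) * Ci) (m - 1)).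
  assert (Hc : c <> 0%C).
  { apply Cpow_nz; intros E; apply (f_equal snd) in E; simpl in E; pose proof PI_RGT_0; lra. }
  assert (Hterm : forall n,
    iter_integrable radii (fun ts => kernel_pow_term z k ts n) /\
    iter_contour radii (fun ts => kernel_pow_term z k ts n)
    = (c * (RtoC (diag_coef m p k n) * Cpow z n))%C).
  { intros n; destruct (iter_contour_prod_coef_integrand n k) as [I1 I2].
    destruct (iter_contour_scal_l _ (RtoC (pow_coef (p 1%nat) k n) * Cpow z n)%C _ I1) as [C1 C2].
    split; [exact C1|]; unfold kernel_pow_term; rewrite C2, I2, diag_coef_split by lia.
    rewrite (RtoC_mult (pow_coef (p 1%nat) k n)); unfold c; ring. }
  assert (Hsum := fun N => iter_contour_csum radii (fun n ts => kernel_pow_term z k ts n) N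
                             (fun n => proj1 (Hterm n))).
  destruct (iter_contour_unif_lim _ _ _ (fun N => proj1 (Hsum N)) (unif_cv_kernel_pow z A k HA))
    as [L1 L2].
  split; [exact L1|].
  eapply is_lim_Cseq_ext; [|exact (is_lim_Cseq_scal_l (/ c)%C _ _ L2)]; intros N; cbv beta.
  change (iter_contour radii (fun ts => csum (kernel_pow_term z k ts) N))
    with (iter_contour radii (fun ts => csum (fun n => kernel_pow_term z k ts n) N)).
  rewrite (proj2 (Hsum N)), (csum_ext _ _ _ (fun n _ => proj2 (Hterm n))), csum_scal_l.
  field; auto.
Qed.

Lemma iter_contour_integrand_geom z :
  (forall ts, on_torus radii ts -> Cmod (kernel z ts) <= 1 / 2) ->
  (forall k, iter_integrable radii (kernel_pow_integrand z k)) ->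
  iter_integrable radii (integrand m p z) /\
  is_lim_Cseq (csum (fun k => iter_contour radii (kernel_pow_integrand z k)))
              (iter_contour radii (integrand m p z)).
Proof.
  intros HK HT; pose proof radii_pos as Hpos.
  set (IVb := Rprod (map Rinv radii)); assert (HIV : 0 < IVb) by (apply Rprod_inv_pos; auto).
  assert (Hsum := fun N => iter_contour_csum radii (kernel_pow_integrand z) N HT).
  destruct (iter_contour_unif_lim radii (fun N ts => csum (fun k => kernel_pow_integrand z k ts) N)
              (integrand m p z)) as [L1 L2].
  - intros N; apply Hsum.
  - intros eps He.
    destruct (pow_lt_1_zero (1 / 2) ltac:(rewrite Rabs_pos_eq; lra) (eps / IVb)) as [N0 HN0].
    { apply Rdiv_lt_0_compat; lra. }
    exists N0; intros N HN ts Hts; rewrite integrand_kernel; unfold kernel_pow_integrand.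
    eapply Rle_trans; [apply Cmod_geom_tail_le; auto|].
    rewrite (Cmod_Cprod_inv_on_torus _ ts Hts Hpos); fold IVb.
    specialize (HN0 N HN); rewrite Rabs_pos_eq in HN0 by (apply pow_le; lra).
    apply Rmult_lt_compat_r with (r := IVb) in HN0; auto.
    unfold Rdiv in HN0; rewrite Rmult_assoc, Rinv_l in HN0; lra.
  - split; [exact L1|]; eapply is_lim_Cseq_ext; [|exact L2]; intros N; cbv beta.
    apply (proj2 (Hsum N)).
Qed.

End Kernel.

Lemma csum_Dcoef_square m p z N :
  (1 <= m)%nat -> (forall i, (1 <= i <= m)%nat -> p i 0%nat = 0) ->
  csum (fun n => RtoC (Dcoef m p n) * Cpow z n)%C N =
  csum (fun k => csum (fun n => RtoC (diag_coef m p k n) * Cpow z n)%C N) N.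
Proof.
  intros Hm Hp0; rewrite csum_swap; apply csum_ext; intros n Hn.
  rewrite csum_RtoC_mult_r, Dcoef_diag_coef by auto; do 2 f_equal.
  apply sum_f_R0_extend; auto; intros k Hk; apply diag_coef_lt; auto; apply Hp0; lia.
Qed.

Section Expansion.

Variables (m : nat) (p : nat -> nat -> R) (r : nat -> R) (Q : nat -> R) (x0 A : R).
Hypothesis Hm : (1 <= m)%nat.
Hypothesis Hp : forall i j, (1 <= i <= m)%nat -> 0 <= p i j.
Hypothesis Hp0 : forall i, (1 <= i <= m)%nat -> p i 0%nat = 0.
Hypothesis Hr : forall i, (2 <= i <= m)%nat -> 0 < r i.
Hypothesis HQ : forall i, (2 <= i <= m)%nat -> is_series (fun j => p i j * (/ r i) ^ j) (Q i).
Hypothesis Hx0 : 0 < x0.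
Hypothesis HA : is_series (fun j => p 1%nat j * x0 ^ j) A.

Lemma p1_nonneg j : 0 <= p 1%nat j.
Proof. apply Hp; lia. Qed.

Lemma p_tail_nonneg i j : (2 <= i <= m)%nat -> 0 <= p i j.
Proof. intros Hi; apply Hp; lia. Qed.

Lemma A_nonneg : 0 <= A.
Proof.
  apply (series_nonneg _ _ (fun j => Rmult_le_pos _ _ (p1_nonneg j) (pow_le _ j (Rlt_le _ _ Hx0)))
                       HA).
Qed.

Let Rp := Rprod (radii m r).
Let Qprod := Rprod (map Q (seq 2 (m - 1))).
(** On the torus [|p_1(z t_2 ... t_m)| <= |z| Rp A / x0] and [|inv_factor| <= Qprod],
    so the kernel is at most [1/2] once [|z| Rp <= x1]. *)
Let x1 := x0 / (2 * (A * Qprod + 1)).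

Lemma Rp_pos : 0 < Rp.
Proof. apply Rprod_pos, radii_pos; auto. Qed.

Lemma A_Qprod_nonneg : 0 <= A * Qprod.
Proof.
  apply Rmult_le_pos; [apply A_nonneg|].
  apply Rprod_nonneg; intros i Hi%in_seq.
  apply (series_nonneg _ _ (fun j => Rmult_le_pos _ _ (Hp i j ltac:(lia))
           (pow_le _ j (Rlt_le _ _ (Rinv_0_lt_compat _ (Hr i ltac:(lia))))))
         (HQ i ltac:(lia))).
Qed.

Lemma x1_pos : 0 < x1.
Proof. pose proof A_Qprod_nonneg; unfold x1; apply Rdiv_lt_0_compat; lra. Qed.

Lemma x1_le_x0 : x1 <= x0.
Proof.
  pose proof A_Qprod_nonneg; unfold x1.
  apply Rmult_le_reg_r with (2 * (A * Qprod + 1)); [lra|].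
  unfold Rdiv; rewrite Rmult_assoc, Rinv_l by lra; nra.
Qed.

Lemma kernel_le_half z : Cmod z * Rp <= x1 ->
  forall ts, on_torus (radii m r) ts -> Cmod (kernel m p z ts) <= 1 / 2.
Proof.
  intros Hz ts Hts; pose proof A_Qprod_nonneg; pose proof x1_le_x0; pose proof x1_pos.
  assert (Hw : Cmod (z * Cprod ts)%C = Cmod z * Rp).
  { rewrite Cmod_mult, (Cmod_Cprod_on_torus _ ts Hts (radii_pos m r Hr)); auto. }
  assert (B1 : Cmod (pser (p 1%nat) (z * Cprod ts)) <= x1 / x0 * A).
  { assert (Hp10 : p 1%nat 0%nat = 0) by (apply Hp0; lia).
    eapply Rle_trans; [apply (Cmod_pser_le_linear _ x0 A); auto using p1_nonneg; lra|].
    rewrite Hw; pose proof A_nonneg; apply Rmult_le_compat_r; auto.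
    apply Rmult_le_compat_r; auto; apply Rlt_le, Rinv_0_lt_compat; auto. }
  assert (B2 := Cmod_inv_factor_le m p r Q p_tail_nonneg Hr HQ ts Hts).
  unfold kernel; rewrite Cmod_mult.
  apply Rle_trans with (x1 / x0 * A * Qprod).
  - apply Rmult_le_compat; auto using Cmod_ge_0.
  - unfold x1; replace (x0 / (2 * (A * Qprod + 1)) / x0 * A * Qprod)
      with (A * Qprod / (2 * (A * Qprod + 1))) by (field; lra).
    apply Rmult_le_reg_r with (2 * (A * Qprod + 1)); [lra|].
    unfold Rdiv; rewrite Rmult_assoc, Rinv_l by lra; lra.
Qed.

Lemma is_series_p1_scaled z : Cmod z * Rp <= x0 ->
  is_series (fun j => p 1%nat j * (Cmod z * Rp) ^ j)
            (Series (fun j => p 1%nat j * (Cmod z * Rp) ^ j)).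
Proof.
  intros Hz; pose proof Rp_pos; pose proof (Cmod_ge_0 z).
  apply Series_correct, (ex_series_pow_le _ x0); auto using p1_nonneg; [|exists A; auto].
  split; [apply Rmult_le_pos|]; lra.
Qed.

Lemma iter_contour_kernel_pow_small z k : Cmod z * Rp <= x1 ->
  iter_integrable (radii m r) (kernel_pow_integrand m p z k) /\
  is_lim_Cseq (csum (fun n => RtoC (diag_coef m p k n) * Cpow z n)%C)
    (/ Cpow (RtoC (2 * PI) * Ci) (m - 1) * iter_contour (radii m r) (kernel_pow_integrand m p z k))%C.
Proof.
  intros Hz; pose proof x1_le_x0.
  apply (iter_contour_kernel_pow m p r Q p1_nonneg p_tail_nonneg Hr HQ z
           (Series (fun j => p 1%nat j * (Cmod z * Rp) ^ j)) k Hm).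
  apply is_series_p1_scaled; lra.
Qed.

(** The coefficients are bounded through the integral representation at the real
    point [2 |z|], where all terms are nonnegative. *)
Lemma diag_coef_le_half_pow z : 2 * Cmod z * Rp <= x1 ->
  forall k n, diag_coef m p k n * (2 * Cmod z) ^ n <= (1 / 2) ^ k.
Proof.
  intros Hz k n; pose proof (Cmod_ge_0 z); pose proof PI_RGT_0.
  pose proof (radii_pos m r Hr) as Hpos.
  set (s := RtoC (2 * Cmod z)).
  assert (Hs : Cmod s = 2 * Cmod z) by (unfold s; rewrite Cmod_R, Rabs_pos_eq; lra).
  destruct (iter_contour_kernel_pow_small s k ltac:(rewrite Hs; lra)) as [I1 C1].
  eapply Rle_trans; [apply (coef_le_Cmod_lim (diag_coef m p k)); eauto; [|lra]|].
  { intros; apply diag_coef_nonneg; auto. }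
  set (c := Cpow (RtoC (2 * PI) * Ci) (m - 1)).
  assert (Hc : Cmod c = (2 * PI) ^ (m - 1)) by (unfold c; rewrite Cmod_pow, Cmod_2PI_Ci; auto).
  assert (Hc0 : 0 < (2 * PI) ^ (m - 1)) by (apply pow_lt; lra).
  assert (Hcnz : c <> 0%C) by (intros E; rewrite E, Cmod_0 in Hc; lra).
  rewrite Cmod_mult, Cmod_inv, Hc by exact Hcnz.
  assert (IB : Cmod (iter_contour (radii m r) (kernel_pow_integrand m p s k))
               <= torus_length (radii m r) * ((1 / 2) ^ k * Rprod (map Rinv (radii m r)))).
  { apply Cmod_iter_contour_le; auto; intros ts Hts; unfold kernel_pow_integrand.
    rewrite Cmod_mult, Cmod_pow, (Cmod_Cprod_inv_on_torus _ ts Hts Hpos).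
    apply Rmult_le_compat_r; [apply Rlt_le, Rprod_inv_pos; auto|].
    apply pow_incr; split; [apply Cmod_ge_0|apply kernel_le_half; auto; rewrite Hs; lra]. }
  apply Rmult_le_reg_l with ((2 * PI) ^ (m - 1)); [lra|].
  rewrite <- Rmult_assoc, Rinv_r, Rmult_1_l by lra.
  replace ((2 * PI) ^ (m - 1)) with (torus_length (radii m r) * Rprod (map Rinv (radii m r)))
    by (rewrite torus_length_Rprod_inv by auto; unfold radii; rewrite length_map, length_seq; auto).
  eapply Rle_trans; [exact IB|right; ring].
Qed.

Lemma is_lim_Dcoef_series z : 2 * Cmod z * Rp <= x1 ->
  is_lim_Cseq (csum (fun n => RtoC (Dcoef m p n) * Cpow z n)%C)
    (/ Cpow (RtoC (2 * PI) * Ci) (m - 1) * iter_contour (radii m r) (integrand m p z))%C.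
Proof.
  intros Hz; pose proof (Cmod_ge_0 z); pose proof Rp_pos.
  set (c := Cpow (RtoC (2 * PI) * Ci) (m - 1)).
  assert (Hz1 : Cmod z * Rp <= x1) by nra.
  destruct (iter_contour_integrand_geom m p r Hr z (kernel_le_half z Hz1)
              (fun k => proj1 (iter_contour_kernel_pow_small z k Hz1))) as [_ Hgeom].
  eapply is_lim_Cseq_ext; [|apply (is_lim_Cseq_double_sum
    (fun k n => RtoC (diag_coef m p k n) * Cpow z n)%C
    (fun k => / c * iter_contour (radii m r) (kernel_pow_integrand m p z k))%C)].
  - intros N; symmetry; apply csum_Dcoef_square; auto.
  - intros k n; rewrite Cmod_mult, Cmod_R, Rabs_pos_eq, Cmod_pow by (apply diag_coef_nonneg; auto).
    replace (Cmod z ^ n) with ((2 * Cmod z) ^ n * (1 / 2) ^ n)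
      by (rewrite <- Rpow_mult_distr; f_equal; field).
    rewrite <- Rmult_assoc; apply Rmult_le_compat_r; [apply pow_le; lra|].
    apply diag_coef_le_half_pow; auto.
  - intros k; apply iter_contour_kernel_pow_small; auto.
  - eapply is_lim_Cseq_ext; [|exact (is_lim_Cseq_scal_l (/ c)%C _ _ Hgeom)].
    intros N; cbv beta; rewrite <- csum_scal_l; reflexivity.
Qed.

Lemma Dcoef_series_near_0 : exists delta, 0 < delta /\ forall z, Cmod z < delta ->
  is_lim_Cseq (csum (fun n => RtoC (Dcoef m p n) * Cpow z n)%C)
    (/ Cpow (RtoC (2 * PI) * Ci) (m - 1) * iter_contour (radii m r) (integrand m p z))%C.
Proof.
  pose proof Rp_pos; pose proof x1_pos.
  exists (x1 / (2 * Rp)); split; [apply Rdiv_lt_0_compat; lra|].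
  intros z Hz; apply is_lim_Dcoef_series.
  apply Rmult_lt_compat_r with (r := 2 * Rp) in Hz; [|lra].
  replace (x1 / (2 * Rp) * (2 * Rp)) with x1 in Hz by (field; lra); lra.
Qed.

End Expansion.

Lemma exists_pos_lt_Rbar (R0 : Rbar) : Rbar_lt 0 R0 -> exists x, 0 < x /\ Rbar_lt x R0.
Proof.
  destruct R0 as [v| |]; simpl; intros H; [exists (v / 2)|exists 1|contradiction]; split; lra.
Qed.

Theorem proposition2 (m : nat) (p : nat -> nat -> R) (r : nat -> R) :
  (2 <= m)%nat ->
  (forall i j, (1 <= i <= m)%nat -> 0 <= p i j) ->
  (forall i, (1 <= i <= m)%nat -> p i 0%nat = 0) ->
  (forall i, (1 <= i <= m)%nat -> Rbar_lt (Finite 0) (CV_radius (p i))) ->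
  (forall i, (2 <= i <= m)%nat ->
     0 < r i /\ Rbar_lt (Finite (/ r i)) (CV_radius (p i))) ->
  exists delta : R, 0 < delta /\
    forall z : C, Cmod z < delta ->
      @is_pseries C_AbsRing C_NormedModule (fun n => RtoC (Dcoef m p n)) z
        (Cmult (Cinv (@pow_n C_Ring (Cmult (RtoC (2 * PI)) Ci) (m - 1)))
               (iter_contour (map r (seq 2 (m - 1))) (integrand m p z))).
Proof.
  intros Hm Hp Hp0 HR Hr.
  assert (Habs : forall i x, (1 <= i <= m)%nat -> 0 <= x -> Rbar_lt x (CV_radius (p i)) ->
                 is_series (fun j => p i j * x ^ j) (Series (fun j => p i j * x ^ j))).
  { intros i x Hi Hx Hlt; apply Series_correct, ex_series_Rabs, CV_disk_inside.
    rewrite Rabs_pos_eq; auto. }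
  destruct (exists_pos_lt_Rbar _ (HR 1%nat ltac:(lia))) as [x0 [Hx0 Hx0R]].
  destruct (Dcoef_series_near_0 m p r (fun i => Series (fun j => p i j * (/ r i) ^ j)) x0
              (Series (fun j => p 1%nat j * x0 ^ j))) as [delta [Hdelta Hseries]];
    auto with arith; try lra.
  - intros i Hi; apply (proj1 (Hr i Hi)).
  - intros i Hi; destruct (Hr i Hi); apply Habs; [lia|apply Rlt_le, Rinv_0_lt_compat|]; auto.
  - apply Habs; [lia|lra|auto].
  - exists delta; split; auto; intros z Hz.
    eapply filterlim_ext; [|exact (is_lim_Cseq_filterlim _ _ (Hseries z Hz))].
    intros N; unfold csum; apply sum_n_ext; intros n.
    change (scal (pow_n z n) (RtoC (Dcoef m p n))) with (Cpow z n * RtoC (Dcoef m p n))%C.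
    apply Cmult_comm.
Qed.
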